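(* Let $0<R_{\rm id}<R_{\rm d}$, and let $\Omega$, $\Gamma_{\rm d}$, $\Gamma_{\rm id}$, $n$, $(\overline u,\overline q)$, $\omega^*$, $v(\omega)$, $\widehat v(\omega)$, $J'(\omega)$, the iteration $\omega_{k+1}=\omega_k-\rho_kJ'(\omega_k)$, $\mu_k=\omega^*-\omega_k$ and $C_j$ be as in the context. If for some $k$ the error has the finite Fourier expansion $\mu_k=\sum_{M\le|j|\le N}a_j^{(k)}e^{ij\theta}$ (integers $N\ge M\ge0$), then $$J'(\omega_k)=-\sum_{M\le|j|\le N}C_ja_j^{(k)}e^{ij\theta}\quad\text{on }\Gamma_{\rm id},$$ and consequently $\mu_{k+1}=\sum_{M\le|j|\le N}a_j^{(k+1)}e^{ij\theta}$ with $$a_j^{(k+1)}=(1-C_j\rho_k)\,a_j^{(k)}\qquad (M\le|j|\le N).$$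
   Context: Setting: $0<R_{\rm id}<R_{\rm d}$; $\Omega=\{(x,y): R_{\rm id}^2<x^2+y^2<R_{\rm d}^2\}$ is an annulus with outer boundary $\Gamma_{\rm d}=\{x^2+y^2=R_{\rm d}^2\}$ and inner boundary $\Gamma_{\rm id}=\{x^2+y^2=R_{\rm id}^2\}$; $(r,\theta)$ are polar coordinates; $n$ is the unit outward normal to $\partial\Omega$ (so $\partial/\partial n=\partial/\partial r$ on $\Gamma_{\rm d}$ and $\partial/\partial n=-\partial/\partial r$ on $\Gamma_{\rm id}$). Given Cauchy data $(\overline u,\overline q)$ on $\Gamma_{\rm d}$. For a boundary value $\omega$ on $\Gamma_{\rm id}$, $v(\omega)$ denotes the solution of the primary problem $-\Delta v=0$ in $\Omega$, $\partial v/\partial n=\overline q$ on $\Gamma_{\rm d}$, $v=\omega$ on $\Gamma_{\rm id}$; $\widehat v(\omega)$ denotes the solution of the adjoint problem $-\Delta \widehat v=0$ in $\Omega$, $\partial\widehat v/\partial n=2(v(\omega)-\overline u)$ on $\Gamma_{\rm d}$, $\widehat v=0$ on $\Gamma_{\rm id}$; and $J'(\omega):=-\partial\widehat v(\omega)/\partial n|_{\Gamma_{\rm id}}$. The exact boundary value $\omega^*$ is assumed to exist, i.e. $v(\omega^* )|_{\Gamma_{\rm d}}=\overline u$. Starting from $\omega_0$ and step sizes $\rho_k>0$, the iteration is $\omega_{k+1}=\omega_k-\rho_kJ'(\omega_k)$ (with exact solution of the boundary value problems), and $\mu_k:=\omega^*-\omega_k$. For integers $j$, $$C_j:=\frac{8R_{\rm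 d}^{2|j|+1}R_{\rm id}^{2|j|-1}}{(R_{\rm id}^{2|j|}+R_{\rm d}^{2|j|})^2}.$$ Functions on $\Gamma_{\rm id}$ may be complex-valued; Fourier expansions are in $e^{ij\theta}$. *)

From Stdlib Require Import Reals Lra ZArith List.
Open Scope R_scope.

(** Complex numbers as pairs (real part, imaginary part). *)
Definition Cx := (R * R)%type.
Definition Cadd (z w : Cx) : Cx := (fst z + fst w, snd z + snd w).
Definition Copp (z : Cx) : Cx := (- fst z, - snd z).
Definition Csub (z w : Cx) : Cx := Cadd z (Copp w).
Definition Cmul (z w : Cx) : Cx :=
  (fst z * fst w - snd z * snd w, fst z * snd w + snd z * fst w).
Definition Cscale (r : R) (z : Cx) : Cx := (r * fst z, r * snd z).
Definition C0 : Cx := (0, 0).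
Definition Cexpi (j : Z) (th : R) : Cx := (cos (IZR j * th), sin (IZR j * th)).

(** Finite Fourier sum  sum_{M <= |j| <= N} a_j e^{i j theta}. *)
Definition Zrange (N : nat) : list Z :=
  map (fun n => (Z.of_nat n - Z.of_nat N)%Z) (seq 0 (2 * N + 1)).
Definition fsum (M N : nat) (a : Z -> Cx) (th : R) : Cx :=
  fold_right (fun j acc => Cadd (Cmul (a j) (Cexpi j th)) acc) C0
    (filter (fun j => Z.leb (Z.of_nat M) (Z.abs j)) (Zrange N)).

Definition Cj (Rid Rd : R) (j : Z) : R :=
  8 * powerRZ Rd (2 * Z.abs j + 1) * powerRZ Rid (2 * Z.abs j - 1)
  / (powerRZ Rid (2 * Z.abs j) + powerRZ Rd (2 * Z.abs j)) ^ 2.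

Definition annulus (Rid Rd : R) (x y : R) : Prop :=
  Rid ^ 2 < x ^ 2 + y ^ 2 < Rd ^ 2.
Definition cl_annulus (Rid Rd : R) (x y : R) : Prop :=
  Rid ^ 2 <= x ^ 2 + y ^ 2 <= Rd ^ 2.

Definition cont_on (D : R -> R -> Prop) (u : R -> R -> R) : Prop :=
  forall x y, D x y -> forall eps, eps > 0 -> exists del, del > 0 /\
    forall x' y', D x' y' -> Rabs (x' - x) < del -> Rabs (y' - y) < del ->
      Rabs (u x' y' - u x y) < eps.

Definition C2_harmonic (D : R -> R -> Prop) (u : R -> R -> R) : Prop :=
  exists ux uy uxx uxy uyx uyy : R -> R -> R,
    (forall x y, D x y ->
       derivable_pt_lim (fun t => u t y) x (ux x y) /\
       derivable_pt_lim (fun t => u x t) y (uy x y) /\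
       derivable_pt_lim (fun t => ux t y) x (uxx x y) /\
       derivable_pt_lim (fun t => ux x t) y (uxy x y) /\
       derivable_pt_lim (fun t => uy t y) x (uyx x y) /\
       derivable_pt_lim (fun t => uy x t) y (uyy x y) /\
       - (uxx x y + uyy x y) = 0) /\
    cont_on D u /\ cont_on D ux /\ cont_on D uy /\ cont_on D uxx /\
    cont_on D uxy /\ cont_on D uyx /\ cont_on D uyy.

(** Normal derivative (outward normal) of a real function at the point of
    angle th on Gamma_d: d/dr, one-sided limit from inside Omega. *)
Definition dn_outer_R (Rid Rd : R) (u : R -> R -> R) (th l : R) : Prop :=
  limit1_in
    (fun r => (u (r * cos th) (r * sin th) - u (Rd * cos th) (Rd * sin th)) / (r - Rd))
    (fun r => Rid <= r < Rd) l Rd.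

(** Normal derivative (outward normal) on Gamma_id: -d/dr, one-sided limit
    from inside Omega. *)
Definition dn_inner_R (Rid Rd : R) (u : R -> R -> R) (th l : R) : Prop :=
  limit1_in
    (fun r => - ((u (r * cos th) (r * sin th) - u (Rid * cos th) (Rid * sin th)) / (r - Rid)))
    (fun r => Rid < r <= Rd) l Rid.

Definition reF (u : R -> R -> Cx) : R -> R -> R := fun x y => fst (u x y).
Definition imF (u : R -> R -> Cx) : R -> R -> R := fun x y => snd (u x y).

Definition dn_outer (Rid Rd : R) (u : R -> R -> Cx) (th : R) (l : Cx) : Prop :=
  dn_outer_R Rid Rd (reF u) th (fst l) /\ dn_outer_R Rid Rd (imF u) th (snd l).
Definition dn_inner (Rid Rd : R) (u : R -> R -> Cx) (th : R) (l : Cx) : Prop :=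
  dn_inner_R Rid Rd (reF u) th (fst l) /\ dn_inner_R Rid Rd (imF u) th (snd l).

Definition mixed_sol (Rid Rd : R) (g h : R -> Cx) (w : R -> R -> Cx) : Prop :=
  C2_harmonic (annulus Rid Rd) (reF w) /\ C2_harmonic (annulus Rid Rd) (imF w) /\
  cont_on (cl_annulus Rid Rd) (reF w) /\ cont_on (cl_annulus Rid Rd) (imF w) /\
  (forall th, dn_outer Rid Rd w th (g th)) /\
  (forall th, w (Rid * cos th) (Rid * sin th) = h th).

Definition primary_sol (Rid Rd : R) (qbar omega : R -> Cx) (v : R -> R -> Cx) : Prop :=
  mixed_sol Rid Rd qbar omega v.

Definition adjoint_sol (Rid Rd : R) (ubar : R -> Cx) (v vhat : R -> R -> Cx) : Prop :=
  mixed_sol Rid Rd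
    (fun th => Cscale 2 (Csub (v (Rd * cos th) (Rd * sin th)) (ubar th)))
    (fun _ => C0) vhat.

(** The functions  r^{|j|} e^{i j th},
    r^{-|j|} e^{i j th}  and  ln r  are harmonic; suitable combinations of them
    give, for each Fourier mode of the error  mu_k = omega_star - omega_k,
    (1) a harmonic  W  with  W = mu_k  on Gamma_id and  dW/dn = 0  on Gamma_d,
    (2) a harmonic  V  with  V = 0  on Gamma_id and  dV/dn = -2 W  on Gamma_d,
        whose normal derivative on Gamma_id is  sum_j C_j a_j e^{i j th}.
    A weak maximum principle (with the barrier  - del ln(r^2/Rid^2) + eps r^2)
    shows that the mixed Dirichlet/Neumann problem has at most one classical
    solution.
    Hence  v(omega_star) = v(omega_k) + W, so the adjoint data  2 (v(omega_k) - ubar)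
    equals  -2 W  on Gamma_d, and uniqueness again gives  vhat(omega_k) = V. *)

From Stdlib Require Import Reals ZArith List.
From Stdlib Require Import Lra Lia Classical ClassicalEpsilon.
Open Scope R_scope.

Definition Cone : Cx := (1, 0).
Definition Ci : Cx := (0, 1).
Definition Cnorm2 (z : Cx) : R := fst z * fst z + snd z * snd z.
Definition Cinv (z : Cx) : Cx := (fst z / Cnorm2 z, - snd z / Cnorm2 z).
Fixpoint Cpow (z : Cx) (n : nat) : Cx :=
  match n with O => Cone | S m => Cmul z (Cpow z m) end.

Lemma Cpair_eq (a b c d : R) : a = c -> b = d -> (a, b) = (c, d).
Proof. intros; subst; reflexivity. Qed.

Ltac cx_unfold := repeat match goal with z : Cx |- _ => destruct z end;
  unfold Csub, Cmul, Cadd, Copp, Cscale, C0, Cone, Ci in *; simpl in *.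
Ltac cx_ring := cx_unfold; apply Cpair_eq; ring.

Lemma Cnorm2_pos (z : Cx) : z <> C0 -> 0 < Cnorm2 z.
Proof.
  destruct z as [a b]; unfold Cnorm2, C0; simpl; intro H.
  destruct (Req_dec a 0) as [-> | Ha].
  - destruct (Req_dec b 0) as [-> | Hb]; [exfalso; auto|].
    assert (0 < b * b) by (apply Rsqr_pos_lt; auto); nra.
  - assert (0 < a * a) by (apply Rsqr_pos_lt; auto); nra.
Qed.

Lemma sum_sq_pos (x y : R) : (x, y) <> C0 -> 0 < x * x + y * y.
Proof. intro H; exact (Cnorm2_pos _ H). Qed.

Lemma dpl_eq (f g : R -> R) (x l l' : R) : (forall y, f y = g y) -> l = l' ->
  derivable_pt_lim f x l -> derivable_pt_lim g x l'.
Proof. intros H <-; apply derivable_pt_lim_ext; exact H. Qed.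

Definition Cderiv (F : R -> Cx) (t : R) (L : Cx) : Prop :=
  derivable_pt_lim (fun s => fst (F s)) t (fst L) /\
  derivable_pt_lim (fun s => snd (F s)) t (snd L).

Lemma Cderiv_eq F G t L L' : (forall s, F s = G s) -> L = L' -> Cderiv F t L -> Cderiv G t L'.
Proof.
  intros H <- [H1 H2]; split; eapply dpl_eq; eauto; intro y; simpl; rewrite H; auto.
Qed.

Lemma Cderiv_const c t : Cderiv (fun _ => c) t C0.
Proof. split; apply derivable_pt_lim_const. Qed.

Lemma dpl_affine x0 u s0 : derivable_pt_lim (fun s => x0 + s * u) s0 u.
Proof.
  eapply dpl_eq. 3: apply (derivable_pt_lim_plus _ _ s0 0 (u * 1) (derivable_pt_lim_const x0 s0)
                           (derivable_pt_lim_scal id u s0 1 (derivable_pt_lim_id s0))).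
  - intro; unfold plus_fct, mult_real_fct, id, fct_cte; ring.
  - ring.
Qed.

Lemma Cderiv_affine z0 u t : Cderiv (fun s => Cadd z0 (Cscale s u)) t u.
Proof. split; simpl; apply dpl_affine. Qed.

Lemma Cderiv_add F G t L K : Cderiv F t L -> Cderiv G t K ->
  Cderiv (fun s => Cadd (F s) (G s)) t (Cadd L K).
Proof. intros [H1 H2] [K1 K2]; split; apply derivable_pt_lim_plus; auto. Qed.

Lemma Cderiv_mul F G t L K : Cderiv F t L -> Cderiv G t K ->
  Cderiv (fun s => Cmul (F s) (G s)) t (Cadd (Cmul L (G t)) (Cmul (F t) K)).
Proof.
  intros [H1 H2] [K1 K2]; split; simpl.
  - eapply dpl_eq. 3: apply (derivable_pt_lim_minus _ _ _ _ _
       (derivable_pt_lim_mult _ _ _ _ _ H1 K1) (derivable_pt_lim_mult _ _ _ _ _ H2 K2)).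
    + reflexivity.
    + ring.
  - eapply dpl_eq. 3: apply (derivable_pt_lim_plus _ _ _ _ _
       (derivable_pt_lim_mult _ _ _ _ _ H1 K2) (derivable_pt_lim_mult _ _ _ _ _ H2 K1)).
    + reflexivity.
    + ring.
Qed.

Lemma Cderiv_inv F t L : F t <> C0 -> Cderiv F t L ->
  Cderiv (fun s => Cinv (F s)) t (Copp (Cmul (Cmul (Cinv (F t)) (Cinv (F t))) L)).
Proof.
  intros Hz [H1 H2]; pose proof (Cnorm2_pos _ Hz) as Hp.
  assert (HN : derivable_pt_lim (fun s => Cnorm2 (F s)) t
                 (2 * fst (F t) * fst L + 2 * snd (F t) * snd L)).
  { eapply dpl_eq. 3: apply (derivable_pt_lim_plus _ _ _ _ _
       (derivable_pt_lim_mult _ _ _ _ _ H1 H1) (derivable_pt_lim_mult _ _ _ _ _ H2 H2)).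
    - reflexivity.
    - ring. }
  unfold Cinv, Cnorm2 in *; split; simpl.
  - eapply dpl_eq. 3: apply (derivable_pt_lim_div _ _ _ _ _ H1 HN).
    + reflexivity.
    + destruct (F t) as [a b], L as [l1 l2]; simpl in *; unfold Rsqr; field; lra.
    + simpl; lra.
  - eapply dpl_eq. 3: apply (derivable_pt_lim_div _ _ _ _ _ (derivable_pt_lim_opp _ _ _ H2) HN).
    + reflexivity.
    + unfold opp_fct; destruct (F t) as [a b], L as [l1 l2]; simpl in *; unfold Rsqr; field; lra.
    + simpl; lra.
Qed.

Lemma Cderiv_pow F t L n : Cderiv F t L ->
  Cderiv (fun s => Cpow (F s) (S n)) t (Cscale (INR (S n)) (Cmul (Cpow (F t) n) L)).
Proof.
  intro H; induction n as [|n IH].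
  - eapply Cderiv_eq. 3: exact H.
    + intro s; simpl; destruct (F s); cx_ring.
    + simpl; cx_ring.
  - eapply Cderiv_eq. 3: apply (Cderiv_mul _ _ _ _ _ H IH).
    + reflexivity.
    + change (Cpow (F t) (S n)) with (Cmul (F t) (Cpow (F t) n)).
      rewrite !S_INR; generalize (Cpow (F t) n) (INR n); intros; cx_ring.
Qed.

Definition cont_at (f : R -> R -> R) (x y : R) : Prop :=
  forall eps, eps > 0 -> exists del, del > 0 /\
    forall x' y', Rabs (x' - x) < del -> Rabs (y' - y) < del ->
      Rabs (f x' y' - f x y) < eps.

Lemma cont_at_ext f g x y : (forall a b, f a b = g a b) -> cont_at f x y -> cont_at g x y.
Proof.
  intros H C eps He; destruct (C eps He) as [d [Hd Hx]]; exists d; split; auto.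
  intros; rewrite <- !H; auto.
Qed.

Lemma cont_at_const c x y : cont_at (fun _ _ => c) x y.
Proof.
  intros eps He; exists 1; split; [lra|]; intros.
  unfold Rminus; rewrite Rplus_opp_r, Rabs_R0; lra.
Qed.

Lemma cont_at_fst x y : cont_at (fun a _ => a) x y.
Proof. intros eps He; exists eps; split; auto. Qed.

Lemma cont_at_snd x y : cont_at (fun _ b => b) x y.
Proof. intros eps He; exists eps; split; auto. Qed.

Lemma Rabs_lt_min (u d1 d2 : R) : Rabs u < Rmin d1 d2 -> Rabs u < d1 /\ Rabs u < d2.
Proof. intro H; split; eapply Rlt_le_trans; eauto; [apply Rmin_l | apply Rmin_r]. Qed.

Lemma cont_at_plus f g x y : cont_at f x y -> cont_at g x y ->
  cont_at (fun a b => f a b + g a b) x y.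
Proof.
  intros Cf Cg eps He.
  destruct (Cf (eps/2)) as [d1 [Hd1 H1]]; [lra|].
  destruct (Cg (eps/2)) as [d2 [Hd2 H2]]; [lra|].
  exists (Rmin d1 d2); split; [apply Rmin_pos; lra|].
  intros a b [Ha1 Ha2]%Rabs_lt_min [Hb1 Hb2]%Rabs_lt_min.
  specialize (H1 a b Ha1 Hb1); specialize (H2 a b Ha2 Hb2).
  replace (f a b + g a b - (f x y + g x y)) with ((f a b - f x y) + (g a b - g x y)) by ring.
  eapply Rle_lt_trans; [apply Rabs_triang | lra].
Qed.

Lemma cont_at_comp (g : R -> R) f x y : cont_at f x y -> continuity_pt g (f x y) ->
  cont_at (fun a b => g (f a b)) x y.
Proof.
  intros Cf Cg eps He.
  destruct (Cg eps He) as [al [Hal Hg]]; destruct (Cf al Hal) as [d [Hd Hf]].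
  exists d; split; auto; intros a b Ha Hb.
  destruct (Req_dec (f a b) (f x y)) as [E|E].
  - rewrite E; unfold Rminus; rewrite Rplus_opp_r, Rabs_R0; lra.
  - apply (Hg (f a b)); split; [split; [exact I | auto] | apply Hf; auto].
Qed.

Lemma continuity_pt_identity x : continuity_pt id x.
Proof. apply derivable_continuous_pt, derivable_pt_id. Qed.

Lemma cont_at_opp f x y : cont_at f x y -> cont_at (fun a b => - f a b) x y.
Proof.
  intro C; apply (cont_at_comp Ropp f x y C).
  exact (continuity_pt_opp id _ (continuity_pt_identity _)).
Qed.

Lemma cont_at_minus f g x y : cont_at f x y -> cont_at g x y ->
  cont_at (fun a b => f a b - g a b) x y.
Proof. intros; apply cont_at_plus; auto; apply cont_at_opp; auto. Qed.

(** Products via the polarisation identity  fg = ((f+g)^2 - (f-g)^2)/4. *)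
Lemma cont_at_mult f g x y : cont_at f x y -> cont_at g x y ->
  cont_at (fun a b => f a b * g a b) x y.
Proof.
  intros Cf Cg.
  assert (Hsq : forall k h, cont_at h x y -> cont_at (fun a b => k * (h a b * h a b)) x y).
  { intros k h Ch; apply (cont_at_comp (fun u => k * (u * u)) h x y Ch).
    apply continuity_pt_scal, continuity_pt_mult; apply continuity_pt_identity. }
  apply cont_at_ext with (f := fun a b => / 4 * ((f a b + g a b) * (f a b + g a b)) +
                                       - / 4 * ((f a b - g a b) * (f a b - g a b))).
  { intros; field. }
  apply cont_at_plus; apply Hsq; [apply cont_at_plus | apply cont_at_minus]; auto.
Qed.

Lemma cont_at_div f g x y : cont_at f x y -> cont_at g x y -> g x y <> 0 ->
  cont_at (fun a b => f a b / g a b) x y.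
Proof.
  intros Cf Cg Hg; unfold Rdiv; apply cont_at_mult; auto.
  apply (cont_at_comp Rinv g x y Cg), (continuity_pt_inv id); auto.
  apply continuity_pt_identity.
Qed.

Lemma cont_at_norm2 x y : cont_at (fun a b => a * a + b * b) x y.
Proof. apply cont_at_plus; apply cont_at_mult; try apply cont_at_fst; apply cont_at_snd. Qed.

Definition Ccont_at (F : R -> R -> Cx) x y : Prop :=
  cont_at (fun a b => fst (F a b)) x y /\ cont_at (fun a b => snd (F a b)) x y.

Lemma Ccont_at_const c x y : Ccont_at (fun _ _ => c) x y.
Proof. split; apply cont_at_const. Qed.

Lemma Ccont_at_add F G x y : Ccont_at F x y -> Ccont_at G x y ->
  Ccont_at (fun a b => Cadd (F a b) (G a b)) x y.
Proof. intros [A B] [C D]; split; simpl; apply cont_at_plus; auto. Qed.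

Lemma Ccont_at_mul F G x y : Ccont_at F x y -> Ccont_at G x y ->
  Ccont_at (fun a b => Cmul (F a b) (G a b)) x y.
Proof.
  intros [A B] [C D]; split; simpl.
  - apply cont_at_minus; apply cont_at_mult; auto.
  - apply cont_at_plus; apply cont_at_mult; auto.
Qed.

Lemma Ccont_at_inv F x y : Ccont_at F x y -> F x y <> C0 ->
  Ccont_at (fun a b => Cinv (F a b)) x y.
Proof.
  intros [A B] H; pose proof (Cnorm2_pos _ H) as P; unfold Cnorm2 in P.
  assert (N : cont_at (fun a b => Cnorm2 (F a b)) x y)
    by (unfold Cnorm2; apply cont_at_plus; apply cont_at_mult; auto).
  split; unfold Cinv; simpl; apply cont_at_div; auto; try (unfold Cnorm2; lra).
  apply cont_at_opp; auto.
Qed.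

Lemma Ccont_at_pow F x y n : Ccont_at F x y -> Ccont_at (fun a b => Cpow (F a b) n) x y.
Proof. intro C; induction n; simpl; [apply Ccont_at_const | apply Ccont_at_mul; auto]. Qed.

Lemma cont_on_of_cont_at D u : (forall x y, D x y -> cont_at u x y) -> cont_on D u.
Proof.
  intros H x y Dxy eps He; destruct (H x y Dxy eps He) as [d [Hd Hc]].
  exists d; split; auto.
Qed.

(** ** An algebra of explicit harmonic functions *)

(** A monomial  c w^n,  where  w  is  z = x + i y  or its conjugate, possibly
    inverted.  Both  z^n, zbar^n  and  z^-n, zbar^-n  are harmonic off 0. *)
Record mono := Mono { m_coef : Cx; m_conj : bool; m_inv : bool; m_deg : nat }.

Definition mono_base (cj : bool) (x y : R) : Cx := if cj then (x, - y) else (x, y).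
Definition mono_var (m : mono) (x y : R) : Cx :=
  if m_inv m then Cinv (mono_base (m_conj m) x y) else mono_base (m_conj m) x y.
Definition mono_val (m : mono) (x y : R) : Cx := Cmul (m_coef m) (Cpow (mono_var m x y) (m_deg m)).

(** Partial derivatives stay monomials:  d/dx w^n = n w^(n-1)  and
    d/dx w^-n = -n w^-(n+1);  d/dy is  +-i  times d/dx. *)
Definition dx_mono (m : mono) : mono :=
  if m_inv m then Mono (Cscale (- INR (m_deg m)) (m_coef m)) (m_conj m) true (S (m_deg m))
  else Mono (Cscale (INR (m_deg m)) (m_coef m)) (m_conj m) false (pred (m_deg m)).
Definition scale_mono (k : Cx) (m : mono) : mono :=
  Mono (Cmul k (m_coef m)) (m_conj m) (m_inv m) (m_deg m).
Definition dir_y (cj : bool) : Cx := if cj then Copp Ci else Ci.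
Definition dy_mono (m : mono) : mono := scale_mono (dir_y (m_conj m)) (dx_mono m).

Lemma mono_val_scale k m x y : mono_val (scale_mono k m) x y = Cmul k (mono_val m x y).
Proof. unfold mono_val, scale_mono, mono_var; simpl; cx_ring. Qed.

Lemma dx_mono_scale k m x y :
  mono_val (dx_mono (scale_mono k m)) x y = Cmul k (mono_val (dx_mono m) x y).
Proof.
  destruct m as [c cj iv n]; unfold dx_mono, scale_mono; destruct iv;
  unfold mono_val, mono_var; simpl; cx_ring.
Qed.

Lemma mono_base_nz cj x y : (x, y) <> C0 -> mono_base cj x y <> C0.
Proof.
  intros H E; apply H; destruct cj; unfold mono_base, C0 in *; inversion E; f_equal; lra.
Qed.

Lemma Cderiv_mono m x0 y0 u1 u2 s0 :
  (x0 + s0 * u1, y0 + s0 * u2) <> C0 ->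
  Cderiv (fun s => mono_val m (x0 + s * u1) (y0 + s * u2)) s0
     (Cadd (Cscale u1 (mono_val (dx_mono m) (x0 + s0 * u1) (y0 + s0 * u2)))
           (Cscale u2 (mono_val (dy_mono m) (x0 + s0 * u1) (y0 + s0 * u2)))).
Proof.
  intro Hnz; destruct m as [c cj iv n].
  set (du := if cj then (u1, - u2) else (u1, u2)).
  assert (HB : Cderiv (fun s => mono_base cj (x0 + s * u1) (y0 + s * u2)) s0 du).
  { eapply Cderiv_eq. 3: apply (Cderiv_affine (mono_base cj x0 y0) du s0).
    - intro s; unfold du, mono_base; destruct cj; cx_ring.
    - reflexivity. }
  set (X := x0 + s0 * u1) in *; set (Y := y0 + s0 * u2) in *.
  assert (HW : Cderiv (fun s => mono_var (Mono c cj iv n) (x0 + s * u1) (y0 + s * u2)) s0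
     (if iv then Copp (Cmul (Cmul (Cinv (mono_base cj X Y)) (Cinv (mono_base cj X Y))) du)
      else du)).
  { unfold mono_var; simpl; destruct iv; [|exact HB].
    exact (Cderiv_inv (fun s => mono_base cj (x0 + s * u1) (y0 + s * u2)) s0 du
             (mono_base_nz cj _ _ Hnz) HB). }
  destruct n as [|k].
  - eapply Cderiv_eq. 3: apply (Cderiv_const (Cmul c Cone)).
    + intro; reflexivity.
    + unfold dy_mono, dx_mono, scale_mono, mono_val, mono_var; destruct iv; simpl; cx_ring.
  - eapply Cderiv_eq.
    3: apply (Cderiv_mul _ _ _ _ _ (Cderiv_const c s0) (Cderiv_pow _ _ _ k HW)).
    + intro; reflexivity.
    + unfold dy_mono, dx_mono, scale_mono, mono_val, mono_var, dir_y, du;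
        cbn [m_coef m_conj m_inv m_deg pred Cpow].
      rewrite S_INR; generalize (INR k); intro r; subst X Y.
      destruct iv; cbn [m_coef m_conj m_inv m_deg pred Cpow].
      * generalize (Cpow (Cinv (mono_base cj (x0 + s0 * u1) (y0 + s0 * u2))) k)
                   (Cinv (mono_base cj (x0 + s0 * u1) (y0 + s0 * u2))).
        intros; destruct cj; cx_ring.
      * generalize (Cpow (mono_base cj (x0 + s0 * u1) (y0 + s0 * u2)) k).
        intros; destruct cj; cx_ring.
Qed.

Lemma Ccont_at_mono m x y : (x, y) <> C0 -> Ccont_at (mono_val m) x y.
Proof.
  intro H; unfold mono_val; apply Ccont_at_mul; [apply Ccont_at_const|]; apply Ccont_at_pow.
  assert (Cb : Ccont_at (fun a b => mono_base (m_conj m) a b) x y).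
  { destruct (m_conj m); split; simpl;
      try apply cont_at_fst; try apply cont_at_snd; apply cont_at_opp, cont_at_snd. }
  unfold mono_var; destruct (m_inv m); auto.
  apply Ccont_at_inv; auto; apply mono_base_nz; auto.
Qed.

Lemma dy_mono_scale m x y :
  mono_val (dy_mono (scale_mono (dir_y (m_conj m)) m)) x y = Copp (mono_val (dx_mono m) x y).
Proof.
  unfold dy_mono at 1; rewrite mono_val_scale; simpl m_conj; rewrite dx_mono_scale.
  generalize (mono_val (dx_mono m) x y); intro; destruct (m_conj m); unfold dir_y; cx_ring.
Qed.

Lemma laplace_mono m x y :
  Cadd (mono_val (dx_mono (dx_mono m)) x y) (mono_val (dy_mono (dy_mono m)) x y) = C0.
Proof.
  assert (E : m_conj (dx_mono m) = m_conj m) by (unfold dx_mono; destruct (m_inv m); reflexivity).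
  unfold dy_mono at 2; rewrite <- E, dy_mono_scale.
  generalize (mono_val (dx_mono (dx_mono m)) x y); intro; cx_ring.
Qed.

Definition msum (ms : list mono) (x y : R) : Cx :=
  fold_right (fun m acc => Cadd (mono_val m x y) acc) C0 ms.
Record hfun := HFun { hf_monos : list mono; hf_log : Cx }.
Definition ln_norm2 (x y : R) : R := ln (x * x + y * y).
Definition hf_val (f : hfun) (x y : R) : Cx :=
  Cadd (msum (hf_monos f) x y) (Cscale (ln_norm2 x y) (hf_log f)).

(** d/dx ln|z|^2 = 1/z + 1/zbar  and  d/dy ln|z|^2 = i/z - i/zbar. *)
Definition dx_log (g : Cx) : list mono := Mono g false true 1 :: Mono g true true 1 :: nil.
Definition dy_log (g : Cx) : list mono :=
  Mono (Cmul Ci g) false true 1 :: Mono (Cmul (Copp Ci) g) true true 1 :: nil.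
Definition dx_hf (f : hfun) : hfun := HFun (map dx_mono (hf_monos f) ++ dx_log (hf_log f)) C0.
Definition dy_hf (f : hfun) : hfun := HFun (map dy_mono (hf_monos f) ++ dy_log (hf_log f)) C0.

Lemma msum_app l1 l2 x y : msum (l1 ++ l2) x y = Cadd (msum l1 x y) (msum l2 x y).
Proof.
  induction l1 as [|m l1 IH]; simpl.
  - destruct (msum l2 x y); cx_ring.
  - rewrite IH; generalize (mono_val m x y); intro; cx_ring.
Qed.

Lemma dx_log_val g x y : (x, y) <> C0 ->
  msum (dx_log g) x y = Cscale (2 * x / (x * x + y * y)) g.
Proof.
  intro H; pose proof (sum_sq_pos _ _ H).
  unfold dx_log, msum, mono_val, mono_var, mono_base, Cinv, Cnorm2; simpl.
  destruct g as [a b]; unfold Cmul, Cadd, Cscale, Cone, C0; simpl; apply Cpair_eq; field; lra.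
Qed.

Lemma dy_log_val g x y : (x, y) <> C0 ->
  msum (dy_log g) x y = Cscale (2 * y / (x * x + y * y)) g.
Proof.
  intro H; pose proof (sum_sq_pos _ _ H).
  unfold dy_log, msum, mono_val, mono_var, mono_base, Cinv, Cnorm2; simpl.
  destruct g as [a b]; unfold Cmul, Cadd, Cscale, Cone, C0, Ci, Copp; simpl; apply Cpair_eq; field; lra.
Qed.

Lemma dpl_ln_norm2 x0 y0 u1 u2 s0 : (x0 + s0 * u1, y0 + s0 * u2) <> C0 ->
  derivable_pt_lim (fun s => ln_norm2 (x0 + s * u1) (y0 + s * u2)) s0
    (u1 * (2 * (x0 + s0 * u1) / ((x0 + s0 * u1) * (x0 + s0 * u1) + (y0 + s0 * u2) * (y0 + s0 * u2)))
     + u2 * (2 * (y0 + s0 * u2) / ((x0 + s0 * u1) * (x0 + s0 * u1) + (y0 + s0 * u2) * (y0 + s0 * u2)))).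
Proof.
  intro H; pose proof (sum_sq_pos _ _ H) as P.
  assert (Hq : derivable_pt_lim
                 (fun s => (x0 + s * u1) * (x0 + s * u1) + (y0 + s * u2) * (y0 + s * u2)) s0
                 (2 * (x0 + s0 * u1) * u1 + 2 * (y0 + s0 * u2) * u2)).
  { eapply dpl_eq. 3: apply (derivable_pt_lim_plus _ _ _ _ _
       (derivable_pt_lim_mult _ _ _ _ _ (dpl_affine x0 u1 s0) (dpl_affine x0 u1 s0))
       (derivable_pt_lim_mult _ _ _ _ _ (dpl_affine y0 u2 s0) (dpl_affine y0 u2 s0))).
    - reflexivity.
    - unfold mult_fct; ring. }
  eapply dpl_eq. 3: apply (derivable_pt_lim_comp _ ln _ _ _ Hq (derivable_pt_lim_ln _ P)).
  - reflexivity.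
  - field; lra.
Qed.

Lemma Cderiv_msum ms x0 y0 u1 u2 s0 :
  (x0 + s0 * u1, y0 + s0 * u2) <> C0 ->
  Cderiv (fun s => msum ms (x0 + s * u1) (y0 + s * u2)) s0
     (Cadd (Cscale u1 (msum (map dx_mono ms) (x0 + s0 * u1) (y0 + s0 * u2)))
           (Cscale u2 (msum (map dy_mono ms) (x0 + s0 * u1) (y0 + s0 * u2)))).
Proof.
  intro H; induction ms as [|m ms IH]; simpl.
  - eapply Cderiv_eq. 3: apply Cderiv_const. reflexivity. cx_ring.
  - eapply Cderiv_eq. 3: apply (Cderiv_add _ _ _ _ _ (Cderiv_mono m _ _ _ _ _ H) IH).
    + reflexivity.
    + generalize (mono_val (dx_mono m) (x0 + s0 * u1) (y0 + s0 * u2))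
        (mono_val (dy_mono m) (x0 + s0 * u1) (y0 + s0 * u2))
        (msum (map dx_mono ms) (x0 + s0 * u1) (y0 + s0 * u2))
        (msum (map dy_mono ms) (x0 + s0 * u1) (y0 + s0 * u2)); intros; cx_ring.
Qed.

Lemma Cderiv_hf f x0 y0 u1 u2 s0 :
  (x0 + s0 * u1, y0 + s0 * u2) <> C0 ->
  Cderiv (fun s => hf_val f (x0 + s * u1) (y0 + s * u2)) s0
     (Cadd (Cscale u1 (hf_val (dx_hf f) (x0 + s0 * u1) (y0 + s0 * u2)))
           (Cscale u2 (hf_val (dy_hf f) (x0 + s0 * u1) (y0 + s0 * u2)))).
Proof.
  intro H; destruct f as [ms g]; set (X := x0 + s0 * u1); set (Y := y0 + s0 * u2).
  assert (HL : Cderiv (fun s => Cscale (ln_norm2 (x0 + s * u1) (y0 + s * u2)) g) s0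
     (Cscale (u1 * (2 * X / (X * X + Y * Y)) + u2 * (2 * Y / (X * X + Y * Y))) g)).
  { pose proof (dpl_ln_norm2 _ _ _ _ _ H) as D; destruct g as [a b]; split; simpl.
    - eapply dpl_eq. 3: apply (derivable_pt_lim_mult _ _ _ _ _ D (derivable_pt_lim_const a s0)).
      + reflexivity.
      + unfold fct_cte, X, Y; simpl; ring.
    - eapply dpl_eq. 3: apply (derivable_pt_lim_mult _ _ _ _ _ D (derivable_pt_lim_const b s0)).
      + reflexivity.
      + unfold fct_cte, X, Y; simpl; ring. }
  eapply Cderiv_eq. 3: apply (Cderiv_add _ _ _ _ _ (Cderiv_msum ms _ _ _ _ _ H) HL).
  - reflexivity.
  - unfold hf_val, dx_hf, dy_hf; simpl; rewrite !msum_app, dx_log_val, dy_log_val by auto.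
    fold X Y; generalize (msum (map dx_mono ms) X Y) (msum (map dy_mono ms) X Y); intros; cx_ring.
Qed.

Lemma Ccont_at_hf f x y : (x, y) <> C0 -> Ccont_at (hf_val f) x y.
Proof.
  intro H; pose proof (sum_sq_pos _ _ H) as P; unfold hf_val.
  apply (Ccont_at_add (msum (hf_monos f)) (fun a b => Cscale (ln_norm2 a b) (hf_log f))).
  - induction (hf_monos f) as [|m ms IH]; simpl; [apply Ccont_at_const|].
    apply (Ccont_at_add (mono_val m) (msum ms)); auto; apply Ccont_at_mono; auto.
  - assert (CL : cont_at ln_norm2 x y).
    { apply (cont_at_comp ln (fun a b => a * a + b * b)); [apply cont_at_norm2|].
      apply derivable_continuous_pt; exists (/ (x * x + y * y)); apply derivable_pt_lim_ln; lra. }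
    split; simpl; apply cont_at_mult; auto; apply cont_at_const.
Qed.

Lemma laplace_hf f x y : Cadd (hf_val (dx_hf (dx_hf f)) x y) (hf_val (dy_hf (dy_hf f)) x y) = C0.
Proof.
  destruct f as [ms g]; unfold hf_val, dx_hf, dy_hf; simpl.
  rewrite !map_app, !msum_app.
  assert (A : Cadd (msum (map dx_mono (map dx_mono ms)) x y)
                   (msum (map dy_mono (map dy_mono ms)) x y) = C0).
  { induction ms as [|m ms IH]; simpl; [cx_ring|].
    pose proof (laplace_mono m x y) as L; revert IH L.
    generalize (mono_val (dx_mono (dx_mono m)) x y) (mono_val (dy_mono (dy_mono m)) x y)
      (msum (map dx_mono (map dx_mono ms)) x y) (msum (map dy_mono (map dy_mono ms)) x y).
    intros; cx_unfold; inversion IH; inversion L; apply Cpair_eq; lra. }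
  assert (B : Cadd (msum (map dx_mono (dx_log g)) x y) (msum (map dy_mono (dy_log g)) x y) = C0).
  { unfold dx_log, dy_log; simpl.
    pose proof (dy_mono_scale (Mono g false true 1) x y) as D1.
    pose proof (dy_mono_scale (Mono g true true 1) x y) as D2.
    unfold scale_mono, dir_y in D1, D2; simpl in D1, D2; rewrite D1, D2.
    generalize (mono_val (dx_mono (Mono g false true 1)) x y)
      (mono_val (dx_mono (Mono g true true 1)) x y); intros; cx_ring. }
  assert (Z : msum (dx_log C0) x y = C0 /\ msum (dy_log C0) x y = C0)
    by (unfold dx_log, dy_log, msum, mono_val; simpl; split; cx_ring).
  destruct Z as [-> ->]; revert A B.
  generalize (msum (map dx_mono (map dx_mono ms)) x y) (msum (map dy_mono (map dy_mono ms)) x y)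
    (msum (map dx_mono (dx_log g)) x y) (msum (map dy_mono (dy_log g)) x y).
  intros; cx_unfold; injection A as A1 A2; injection B as B1 B2; apply Cpair_eq; nra.
Qed.

Lemma Cderiv_hf_x f x y : (x, y) <> C0 -> Cderiv (fun t => hf_val f t y) x (hf_val (dx_hf f) x y).
Proof.
  intro H; assert (H' : (0 + x * 1, y + x * 0) <> C0) by (rewrite Rmult_1_r, Rmult_0_r,
    Rplus_0_l, Rplus_0_r; auto).
  eapply Cderiv_eq. 3: apply (Cderiv_hf f 0 y 1 0 x H').
  - intro s; cbv beta; rewrite Rmult_1_r, Rmult_0_r, Rplus_0_l, Rplus_0_r; reflexivity.
  - rewrite Rmult_1_r, Rmult_0_r, Rplus_0_l, Rplus_0_r.
    generalize (hf_val (dx_hf f) x y) (hf_val (dy_hf f) x y); intros; cx_ring.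
Qed.

Lemma Cderiv_hf_y f x y : (x, y) <> C0 -> Cderiv (fun t => hf_val f x t) y (hf_val (dy_hf f) x y).
Proof.
  intro H; assert (H' : (x + y * 0, 0 + y * 1) <> C0) by (rewrite Rmult_1_r, Rmult_0_r,
    Rplus_0_l, Rplus_0_r; auto).
  eapply Cderiv_eq. 3: apply (Cderiv_hf f x 0 0 1 y H').
  - intro s; cbv beta; rewrite Rmult_1_r, Rmult_0_r, Rplus_0_l, Rplus_0_r; reflexivity.
  - rewrite Rmult_1_r, Rmult_0_r, Rplus_0_l, Rplus_0_r.
    generalize (hf_val (dx_hf f) x y) (hf_val (dy_hf f) x y); intros; cx_ring.
Qed.

(** The closed annulus avoids the origin, where the monomials are singular. *)
Lemma annulus_nz Rid Rd x y : annulus Rid Rd x y -> (x, y) <> C0.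
Proof.
  unfold annulus; intros [A B] E; inversion E; subst; simpl in A.
  assert (0 <= Rid ^ 2) by (simpl; nra); lra.
Qed.

Lemma cl_annulus_nz Rid Rd x y : 0 < Rid -> cl_annulus Rid Rd x y -> (x, y) <> C0.
Proof.
  unfold cl_annulus; intros P [A B] E; inversion E; subst; simpl in A.
  assert (0 < Rid * (Rid * 1)) by (apply Rmult_lt_0_compat; lra); lra.
Qed.

Section RealPart.
(** [pr] is a real-linear projection of  C  onto  R  (the real or imaginary part). *)
Variable pr : Cx -> R.
Hypothesis pr_deriv : forall F t L, Cderiv F t L -> derivable_pt_lim (fun s => pr (F s)) t (pr L).
Hypothesis pr_cont : forall F x y, Ccont_at F x y -> cont_at (fun a b => pr (F a b)) x y.
Hypothesis pr_add : forall u w, pr (Cadd u w) = pr u + pr w.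
Hypothesis pr_0 : pr C0 = 0.

Lemma hf_C2_harmonic Rid Rd f : C2_harmonic (annulus Rid Rd) (fun x y => pr (hf_val f x y)).
Proof.
  exists (fun x y => pr (hf_val (dx_hf f) x y)), (fun x y => pr (hf_val (dy_hf f) x y)),
    (fun x y => pr (hf_val (dx_hf (dx_hf f)) x y)), (fun x y => pr (hf_val (dy_hf (dx_hf f)) x y)),
    (fun x y => pr (hf_val (dx_hf (dy_hf f)) x y)), (fun x y => pr (hf_val (dy_hf (dy_hf f)) x y)).
  assert (Hc : forall g, cont_on (annulus Rid Rd) (fun x y => pr (hf_val g x y)))
    by (intro g; apply cont_on_of_cont_at; intros x y A;
        apply pr_cont, Ccont_at_hf; eapply annulus_nz; eauto).
  split; [|repeat split; apply Hc].
  intros x y A; pose proof (annulus_nz _ _ _ _ A) as N.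
  split; [apply pr_deriv, (Cderiv_hf_x f), N|].
  split; [apply pr_deriv, (Cderiv_hf_y f), N|].
  split; [apply pr_deriv, (Cderiv_hf_x (dx_hf f)), N|].
  split; [apply pr_deriv, (Cderiv_hf_y (dx_hf f)), N|].
  split; [apply pr_deriv, (Cderiv_hf_x (dy_hf f)), N|].
  split; [apply pr_deriv, (Cderiv_hf_y (dy_hf f)), N|].
  rewrite <- Ropp_0, <- pr_0, <- (laplace_hf f x y), pr_add; ring.
Qed.

Lemma hf_cont_closure Rid Rd f : 0 < Rid ->
  cont_on (cl_annulus Rid Rd) (fun x y => pr (hf_val f x y)).
Proof.
  intro; apply cont_on_of_cont_at; intros x y A.
  apply pr_cont, Ccont_at_hf; eapply cl_annulus_nz; eauto.
Qed.

End RealPart.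

Lemma hf_harmonic Rid Rd f : 0 < Rid ->
  C2_harmonic (annulus Rid Rd) (reF (hf_val f)) /\ C2_harmonic (annulus Rid Rd) (imF (hf_val f)) /\
  cont_on (cl_annulus Rid Rd) (reF (hf_val f)) /\ cont_on (cl_annulus Rid Rd) (imF (hf_val f)).
Proof.
  intro P; unfold reF, imF; repeat split.
  - apply (hf_C2_harmonic fst); [intros F t L []; auto | intros F x y []; auto | reflexivity | reflexivity].
  - apply (hf_C2_harmonic snd); [intros F t L []; auto | intros F x y []; auto | reflexivity | reflexivity].
  - apply (hf_cont_closure fst); [intros F x y []; auto | exact P].
  - apply (hf_cont_closure snd); [intros F x y []; auto | exact P].
Qed.

Lemma cont_at_slice f x y : cont_at f x y -> continuity_pt (fun t => f x t) y.
Proof.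
  intros C eps He; destruct (C eps He) as [d [Hd H]]; exists d; split; auto.
  intros t [_ Ht]; simpl in *; unfold R_dist in *; apply H; auto.
  unfold Rminus; rewrite Rplus_opp_r, Rabs_R0; lra.
Qed.

Lemma adherence_in_interval (u : nat -> R) c d l :
  (forall n, c <= u n <= d) -> ValAdh u l -> c <= l <= d.
Proof.
  intros Hu Hl.
  assert (Hfar : forall e, 0 < e -> exists p, Rabs (u p - l) < e).
  { intros e He; destruct (Hl (disc l (mkposreal _ He)) 0%nat) as [p [_ Hp]].
    - exists (mkposreal _ He); intros y Hy; exact Hy.
    - exists p; exact Hp. }
  split; apply Rnot_lt_le; intro Hout.
  - destruct (Hfar (c - l)) as [p Hp]; [lra|]; specialize (Hu p); apply Rabs_def2 in Hp; lra.
  - destruct (Hfar (l - d)) as [p Hp]; [lra|]; specialize (Hu p); apply Rabs_def2 in Hp; lra.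
Qed.

(** Tube lemma: a bound on the compact slice  {x0} x [c, d]  persists, up to
    eps, on a neighbourhood of it (by Bolzano-Weierstrass). *)
Lemma tube_lemma f x0 c d M eps : (forall x y, cont_at f x y) -> c <= d -> eps > 0 ->
  (forall y, c <= y <= d -> f x0 y <= M) ->
  exists del, del > 0 /\ forall x y, Rabs (x - x0) < del -> c <= y <= d -> f x y < M + eps.
Proof.
  intros Cf Hcd He HM; apply NNPP; intro Hn.
  assert (Hbad : forall n : nat, exists p : R * R, Rabs (fst p - x0) < / (INR n + 1) /\
                   c <= snd p <= d /\ f (fst p) (snd p) >= M + eps).
  { intro n; apply NNPP; intro Hn2; apply Hn; exists (/ (INR n + 1)); split.
    - apply Rlt_gt, Rinv_0_lt_compat; pose proof (pos_INR n); lra.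
    - intros x y Hx Hy; apply Rnot_le_lt; intro Hle; apply Hn2.
      exists (x, y); simpl; repeat split; auto; lra. }
  set (sq := fun n => proj1_sig (constructive_indefinite_description _ (Hbad n))).
  assert (Hsq : forall n, Rabs (fst (sq n) - x0) < / (INR n + 1) /\ c <= snd (sq n) <= d /\
                  f (fst (sq n)) (snd (sq n)) >= M + eps)
    by (intro n; exact (proj2_sig (constructive_indefinite_description _ (Hbad n)))).
  destruct (Bolzano_Weierstrass (fun n => snd (sq n)) (fun y => c <= y <= d) (compact_P3 c d))
    as [l Hl]; [intro n; apply Hsq|].
  assert (Hlcd : c <= l <= d)
    by (apply (adherence_in_interval (fun n => snd (sq n))); auto; intro; apply Hsq).
  destruct (Cf x0 l eps He) as [del [Hdel Hc]].
  destruct (archimed_cor1 del Hdel) as [N [HN HN0]].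
  destruct (Hl (disc l (mkposreal _ Hdel)) N) as [p [Hp1 Hp2]];
    [exists (mkposreal _ Hdel); intros y Hy; exact Hy|].
  unfold disc in Hp2; simpl in Hp2; destruct (Hsq p) as [Q1 [Q2 Q3]].
  assert (Hx : Rabs (fst (sq p) - x0) < del).
  { apply lt_INR in HN0; apply le_INR in Hp1; simpl in HN0.
    eapply Rlt_trans; [exact Q1|]; eapply Rle_lt_trans; [|exact HN].
    apply Rinv_le_contravar; lra. }
  specialize (Hc _ _ Hx Hp2); specialize (HM l Hlcd); apply Rabs_def2 in Hc; lra.
Qed.

Lemma max_on_rectangle f a b c d : (forall x y, cont_at f x y) -> a <= b -> c <= d ->
  exists x0 y0, a <= x0 <= b /\ c <= y0 <= d /\
    forall x y, a <= x <= b -> c <= y <= d -> f x y <= f x0 y0.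
Proof.
  intros Cf Hab Hcd.
  assert (Hy : forall x, exists y, c <= y <= d /\ forall t, c <= t <= d -> f x t <= f x y).
  { intro x; destruct (continuity_ab_maj (fun t => f x t) c d Hcd) as [y [H1 H2]].
    - intros; apply cont_at_slice; auto.
    - exists y; split; auto. }
  set (ym := fun x => proj1_sig (constructive_indefinite_description _ (Hy x))).
  assert (Hym : forall x, c <= ym x <= d /\ forall t, c <= t <= d -> f x t <= f x (ym x))
    by (intro x; exact (proj2_sig (constructive_indefinite_description _ (Hy x)))).
  (* The slice maximum  g x = max_y f x y  is continuous in  x. *)
  set (g := fun x => f x (ym x)).
  assert (Cg : forall x0, continuity_pt g x0).
  { intros x0 eps He.
    destruct (Cf x0 (ym x0) eps He) as [d1 [Hd1 C1]].
    destruct (tube_lemma f x0 c d (g x0) eps Cf Hcd He) as [d2 [Hd2 C2]];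
      [intros; apply Hym; auto|].
    exists (Rmin d1 d2); split; [apply Rmin_pos; lra|].
    intros x [_ Hx]; simpl in *; unfold R_dist in *; apply Rabs_lt_min in Hx as [Hx1 Hx2].
    assert (A1 : Rabs (f x (ym x0) - f x0 (ym x0)) < eps)
      by (apply C1; auto; unfold Rminus; rewrite Rplus_opp_r, Rabs_R0; lra).
    assert (A2 : g x < g x0 + eps) by (apply C2; auto; apply Hym).
    assert (A3 : f x (ym x0) <= g x) by (apply Hym; apply Hym).
    unfold g in *; apply Rabs_def2 in A1; apply Rabs_def1; lra. }
  destruct (continuity_ab_maj g a b Hab) as [x0 [H1 H2]]; [intros; apply Cg|].
  exists x0, (ym x0); split; [auto|]; split; [apply Hym|].
  intros x y Hx Hy'; eapply Rle_trans; [apply (proj2 (Hym x)); auto | apply H1; auto].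
Qed.

Lemma cos_sin_sq t : cos t * cos t + sin t * sin t = 1.
Proof. pose proof (sin2_cos2 t); unfold Rsqr in *; lra. Qed.

Lemma polar_norm2 r t : (r * cos t) * (r * cos t) + (r * sin t) * (r * sin t) = r * r.
Proof. pose proof (cos_sin_sq t); nra. Qed.

Lemma polar_coordinates x y : 0 < x * x + y * y -> exists r th,
  r = sqrt (x * x + y * y) /\ 0 <= th <= 2 * PI /\ x = r * cos th /\ y = r * sin th.
Proof.
  intro P; set (r := sqrt (x * x + y * y)).
  assert (Hr : 0 < r) by (apply sqrt_lt_R0; auto).
  assert (Hr2 : r * r = x * x + y * y) by (apply sqrt_sqrt; lra).
  assert (Hb : -1 <= x / r <= 1).
  { assert (x * x <= r * r) by nra.
    split; apply (Rmult_le_reg_r r); auto; unfold Rdiv;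
      rewrite Rmult_assoc, Rinv_l, Rmult_1_r by lra; nra. }
  set (t0 := acos (x / r)).
  assert (Ct : cos t0 = x / r) by (apply cos_acos; auto).
  assert (St : sin t0 = Rabs y / r).
  { unfold t0; rewrite sin_acos by auto; apply sqrt_lem_1.
    - unfold Rsqr; assert ((x / r) * (x / r) <= 1) by nra; lra.
    - unfold Rdiv; apply Rmult_le_pos; [apply Rabs_pos | left; apply Rinv_0_lt_compat; auto].
    - unfold Rsqr, Rdiv.
      assert (A : Rabs y * Rabs y = y * y) by (rewrite <- Rabs_mult; apply Rabs_right; nra).
      replace (Rabs y * / r * (Rabs y * / r)) with ((Rabs y * Rabs y) / (r * r)) by (field; lra).
      replace (x * / r * (x * / r)) with ((x * x) / (r * r)) by (field; lra).
      rewrite A, Hr2; field; lra. }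
  pose proof (acos_bound (x / r)) as Bt; fold t0 in Bt; pose proof PI_RGT_0.
  destruct (Rle_dec 0 y) as [Hy|Hy].
  - exists r, t0; repeat split; auto; try lra.
    + rewrite Ct; field; lra.
    + rewrite St, Rabs_right by lra; field; lra.
  - exists r, (2 * PI - t0); repeat split; auto; try lra.
    + rewrite cos_minus, cos_2PI, sin_2PI, Ct; field; lra.
    + rewrite sin_minus, cos_2PI, sin_2PI, St, Rabs_left by lra; field; lra.
Qed.

Lemma cl_annulus_polar Rid Rd r t : 0 < Rid -> Rid <= r <= Rd ->
  cl_annulus Rid Rd (r * cos t) (r * sin t).
Proof. intros P [A B]; unfold cl_annulus; simpl; rewrite !Rmult_1_r, polar_norm2; split; nra. Qed.

Lemma annulus_polar Rid Rd r t : 0 < Rid -> Rid < r < Rd ->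
  annulus Rid Rd (r * cos t) (r * sin t).
Proof. intros P [A B]; unfold annulus; simpl; rewrite !Rmult_1_r, polar_norm2; split; nra. Qed.

Lemma cl_annulus_polar_inv Rid Rd x y : 0 < Rid -> Rid <= Rd -> cl_annulus Rid Rd x y ->
  exists r th, Rid <= r <= Rd /\ 0 <= th <= 2 * PI /\ x = r * cos th /\ y = r * sin th.
Proof.
  intros P P' Hxy; unfold cl_annulus in Hxy; simpl in Hxy; rewrite !Rmult_1_r in Hxy.
  assert (0 < Rid * Rid) by (apply Rmult_lt_0_compat; lra).
  destruct (polar_coordinates x y) as [r [th [Er [Eth [Ex Ey]]]]]; [lra|].
  exists r, th; split; [|auto]; subst r; split.
  - rewrite <- (sqrt_square Rid) by lra; apply sqrt_le_1_alt; lra.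
  - rewrite <- (sqrt_square Rd) by lra; apply sqrt_le_1_alt; lra.
Qed.

Lemma cont_at_comp_on D u P1 P2 a b : cont_on D u -> (forall a b, D (P1 a b) (P2 a b)) ->
  cont_at P1 a b -> cont_at P2 a b -> cont_at (fun a b => u (P1 a b) (P2 a b)) a b.
Proof.
  intros Cu HD C1 C2 eps He.
  destruct (Cu _ _ (HD a b) eps He) as [d [Hd Hc]].
  destruct (C1 d Hd) as [d1 [Hd1 H1]]; destruct (C2 d Hd) as [d2 [Hd2 H2]].
  exists (Rmin d1 d2); split; [apply Rmin_pos; lra|].
  intros a' b' [Ha1 Ha2]%Rabs_lt_min [Hb1 Hb2]%Rabs_lt_min; apply Hc; auto.
Qed.

Definition clamp (a b r : R) : R := Rmax a (Rmin b r).

Lemma clamp_in a b r : a <= b -> a <= clamp a b r <= b.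
Proof. intro; unfold clamp, Rmax, Rmin; repeat destruct Rle_dec; lra. Qed.

Lemma clamp_id a b r : a <= r <= b -> clamp a b r = r.
Proof. intro; unfold clamp, Rmax, Rmin; repeat destruct Rle_dec; lra. Qed.

Lemma cont_at_clamp a b r t : a <= b -> cont_at (fun r _ => clamp a b r) r t.
Proof.
  intros Hab eps He; exists eps; split; auto; intros r' t' Hr _.
  eapply Rle_lt_trans; [|exact Hr].
  unfold clamp, Rmax, Rmin; repeat destruct Rle_dec; unfold Rabs; repeat destruct Rcase_abs; lra.
Qed.

(** A function continuous on the closed annulus attains its maximum there:
    maximise  (r, t) |-> v (c r cos t, c r sin t)  over  [Rid, Rd] x [0, 2 pi],
    where  c  clamps  r  into  [Rid, Rd]  so that the map is defined everywhere. *)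
Lemma max_on_cl_annulus Rid Rd v : 0 < Rid -> Rid <= Rd -> cont_on (cl_annulus Rid Rd) v ->
  exists r0 t0, Rid <= r0 <= Rd /\
    forall x y, cl_annulus Rid Rd x y -> v x y <= v (r0 * cos t0) (r0 * sin t0).
Proof.
  intros P0 P1 Cv.
  set (F := fun r t => v (clamp Rid Rd r * cos t) (clamp Rid Rd r * sin t)).
  assert (CF : forall r t, cont_at F r t).
  { intros r t; apply (cont_at_comp_on (cl_annulus Rid Rd) v); auto.
    - intros; apply cl_annulus_polar, clamp_in; auto.
    - apply cont_at_mult; [apply cont_at_clamp; lra|].
      apply (cont_at_comp cos (fun _ t => t)); [apply cont_at_snd | apply continuity_cos].
    - apply cont_at_mult; [apply cont_at_clamp; lra|].
      apply (cont_at_comp sin (fun _ t => t)); [apply cont_at_snd | apply continuity_sin]. }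
  pose proof PI_RGT_0.
  destruct (max_on_rectangle F Rid Rd 0 (2 * PI) CF) as [r0 [t0 [Hr0 [Ht0 Hmax]]]]; try lra.
  exists r0, t0; split; auto; intros x y Hxy.
  destruct (cl_annulus_polar_inv Rid Rd x y P0 P1 Hxy) as [r [th [Hr [Hth [-> ->]]]]].
  specialize (Hmax r th Hr Hth); unfold F in Hmax; rewrite !clamp_id in Hmax by auto; exact Hmax.
Qed.

Lemma second_derivative_at_max g g1 g2 x0 del : del > 0 ->
  (forall t, Rabs (t - x0) < del -> derivable_pt_lim g t (g1 t)) ->
  derivable_pt_lim g1 x0 g2 ->
  (forall t, Rabs (t - x0) < del -> g t <= g x0) -> g2 <= 0.
Proof.
  intros Hd Hg Hg1 Hmax.
  assert (Z : g1 x0 = 0).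
  { assert (D0 : derivable_pt_lim g x0 (g1 x0))
      by (apply Hg; unfold Rminus; rewrite Rplus_opp_r, Rabs_R0; lra).
    apply (deriv_maximum g (x0 - del) (x0 + del) x0 (exist _ (g1 x0) D0)); try lra.
    intros t H1 H2; apply Hmax, Rabs_def1; lra. }
  apply Rnot_lt_le; intro Hpos.
  destruct (Hg1 (g2 / 2)) as [dl Hdl]; [lra|].
  set (h0 := Rmin dl del / 2).
  assert (Hh0 : 0 < h0 /\ h0 < dl /\ h0 < del).
  { unfold h0; pose proof (cond_pos dl); pose proof (Rmin_l dl del); pose proof (Rmin_r dl del).
    assert (0 < Rmin dl del) by (apply Rmin_pos; lra); lra. }
  (* By the mean value theorem  g (x0 + h0) - g x0 = h0 g1 c  with  g1 c > 0. *)
  destruct (MVT_cor2 g g1 x0 (x0 + h0)) as [c [Hc1 Hc2]]; [lra| intros c Hc; apply Hg, Rabs_def1; lra|].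
  assert (Hpc : g1 c > 0).
  { specialize (Hdl (c - x0)); rewrite Z in Hdl; replace (x0 + (c - x0)) with c in Hdl by ring.
    assert (Q : Rabs ((g1 c - 0) / (c - x0) - g2) < g2 / 2) by (apply Hdl; [lra | rewrite Rabs_right; lra]).
    apply Rabs_def2 in Q; destruct Q as [Q1 Q2].
    assert (0 < g1 c / (c - x0)) by (replace (g1 c) with (g1 c - 0) by ring; lra).
    apply (Rmult_lt_reg_r (/ (c - x0))); [apply Rinv_0_lt_compat; lra | unfold Rdiv in *; lra]. }
  assert (g (x0 + h0) <= g x0) by (apply Hmax; rewrite Rabs_right; lra).
  assert (0 < g1 c * (x0 + h0 - x0)) by (apply Rmult_lt_0_compat; lra); lra.
Qed.

Lemma left_limit_nonneg F a b l : a < b -> limit1_in F (fun r => a <= r < b) l b ->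
  (forall r, a <= r < b -> 0 <= F r) -> 0 <= l.
Proof.
  intros Hab HL HF; apply Rnot_lt_le; intro Hl.
  destruct (HL (- l)) as [al [Hal Ha]]; [lra|].
  set (r := Rmax a (b - al / 2)).
  assert (Hr : a <= r < b /\ Rabs (r - b) < al).
  { unfold r, Rmax; destruct (Rle_dec a (b - al / 2)); repeat split; try lra; apply Rabs_def1; lra. }
  destruct Hr as [Hr1 Hr2]; specialize (Ha r (conj Hr1 Hr2)); simpl in Ha; unfold R_dist in Ha.
  specialize (HF r Hr1); apply Rabs_def2 in Ha; lra.
Qed.

Lemma difference_quotient_limit phi r0 d (D : R -> Prop) : (forall r, D r -> r <> r0) ->
  derivable_pt_lim phi r0 d -> limit1_in (fun r => (phi r - phi r0) / (r - r0)) D d r0.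
Proof.
  intros HD Hd eps He; destruct (Hd eps He) as [del Hdel].
  exists del; split; [apply cond_pos|].
  intros r [Dr Hr]; simpl in *; unfold R_dist in *.
  specialize (Hdel (r - r0)); replace (r0 + (r - r0)) with r in Hdel by ring.
  apply Hdel; [specialize (HD r Dr); lra | auto].
Qed.

Lemma dpl_add_scal f g x a b k : derivable_pt_lim f x a -> derivable_pt_lim g x b ->
  derivable_pt_lim (fun t => f t + k * g t) x (a + k * b).
Proof. intros Hf Hg; apply (derivable_pt_lim_plus _ _ _ _ _ Hf (derivable_pt_lim_scal _ k _ _ Hg)). Qed.

Lemma dpl_sq x : derivable_pt_lim (fun t => t * t) x (2 * x).
Proof.
  eapply dpl_eq. 3: apply (derivable_pt_lim_mult _ _ _ _ _ (derivable_pt_lim_id x) (derivable_pt_lim_id x)).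
  - reflexivity.
  - unfold id; ring.
Qed.

Lemma dpl_ln_sq r : 0 < r -> derivable_pt_lim (fun s => ln (s * s)) r (2 / r).
Proof.
  intro H; eapply dpl_eq.
  3: apply (derivable_pt_lim_comp (fun s => s * s) ln r _ _ (dpl_sq r) (derivable_pt_lim_ln (r * r) ltac:(nra))).
  - reflexivity.
  - field; lra.
Qed.

Lemma cont_on_lin D f g k : cont_on D f -> cont_on D g -> cont_on D (fun x y => f x y + k * g x y).
Proof.
  intros Cf Cg x y Dxy eps He.
  assert (Hk : 0 < Rabs k + 1) by (pose proof (Rabs_pos k); lra).
  destruct (Cf x y Dxy (eps / 2)) as [d1 [Hd1 H1]]; [lra|].
  destruct (Cg x y Dxy (eps / 2 / (Rabs k + 1))) as [d2 [Hd2 H2]]; [apply Rdiv_lt_0_compat; lra|].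
  exists (Rmin d1 d2); split; [apply Rmin_pos; lra|].
  intros a b Dab [Ha1 Ha2]%Rabs_lt_min [Hb1 Hb2]%Rabs_lt_min.
  specialize (H1 a b Dab Ha1 Hb1); specialize (H2 a b Dab Ha2 Hb2).
  replace (f a b + k * g a b - (f x y + k * g x y)) with ((f a b - f x y) + k * (g a b - g x y)) by ring.
  eapply Rle_lt_trans; [apply Rabs_triang|]; rewrite Rabs_mult.
  assert (Rabs k * Rabs (g a b - g x y) <= (Rabs k + 1) * (eps / 2 / (Rabs k + 1))).
  { apply Rmult_le_compat; try apply Rabs_pos; lra. }
  replace ((Rabs k + 1) * (eps / 2 / (Rabs k + 1))) with (eps / 2) in H by (field; lra); lra.
Qed.

Lemma C2_harmonic_lin D f g k : C2_harmonic D f -> C2_harmonic D g ->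
  C2_harmonic D (fun x y => f x y + k * g x y).
Proof.
  intros [ux [uy [uxx [uxy [uyx [uyy [Hd Hc]]]]]]] [vx [vy [vxx [vxy [vyx [vyy [Kd Kc]]]]]]].
  exists (fun x y => ux x y + k * vx x y), (fun x y => uy x y + k * vy x y),
    (fun x y => uxx x y + k * vxx x y), (fun x y => uxy x y + k * vxy x y),
    (fun x y => uyx x y + k * vyx x y), (fun x y => uyy x y + k * vyy x y).
  split.
  - intros x y Dxy; destruct (Hd x y Dxy) as [A1 [A2 [A3 [A4 [A5 [A6 A7]]]]]];
      destruct (Kd x y Dxy) as [B1 [B2 [B3 [B4 [B5 [B6 B7]]]]]].
    repeat (split; [apply dpl_add_scal; assumption|]); nra.
  - destruct Hc as [C1 [C2 [C3 [C4 [C5 [C6 C7]]]]]], Kc as [K1 [K2 [K3 [K4 [K5 [K6 K7]]]]]].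
    repeat split; apply cont_on_lin; assumption.
Qed.

Lemma dn_outer_R_radial Rid Rd u th phi d : Rid < Rd ->
  (forall r, Rid <= r <= Rd -> u (r * cos th) (r * sin th) = phi r) ->
  derivable_pt_lim phi Rd d -> dn_outer_R Rid Rd u th d.
Proof.
  intros HR E D; unfold dn_outer_R.
  eapply limit1_ext; [|apply (difference_quotient_limit phi Rd d); [|exact D]].
  - intros r Hr; cbv beta; rewrite !E; auto; lra.
  - intros r Hr; lra.
Qed.

Lemma dn_inner_R_radial Rid Rd u th phi d : Rid < Rd ->
  (forall r, Rid <= r <= Rd -> u (r * cos th) (r * sin th) = phi r) ->
  derivable_pt_lim phi Rid d -> dn_inner_R Rid Rd u th (- d).
Proof.
  intros HR E D; unfold dn_inner_R.
  eapply limit1_ext; [|apply limit_Ropp, (difference_quotient_limit phi Rid d); [|exact D]].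
  - intros r Hr; cbv beta; rewrite !E; auto; lra.
  - intros r Hr; lra.
Qed.

Lemma dn_outer_R_lin Rid Rd f g k th a b : dn_outer_R Rid Rd f th a -> dn_outer_R Rid Rd g th b ->
  dn_outer_R Rid Rd (fun x y => f x y + k * g x y) th (a + k * b).
Proof.
  unfold dn_outer_R; intros A B.
  assert (Bk := limit_mul (fun _ => k) _ _ k b Rd (limit_free (fun _ => k) _ Rd Rd) B).
  eapply limit1_ext; [|apply (limit_plus _ _ _ _ _ _ A Bk)].
  intros r Hr; simpl; field; lra.
Qed.

(** ** A weak maximum principle and uniqueness for the mixed problem *)

Section MaxPrinciple.
Variables Rid Rd : R.
Hypothesis Rid_pos : 0 < Rid.
Hypothesis Rid_lt_Rd : Rid < Rd.

(** [w] plus the strictly subharmonic paraboloid  ep |x|^2. *)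
Definition add_paraboloid (w : R -> R -> R) (ep : R) (x y : R) : R := w x y + ep * (x * x + y * y).

Lemma annulus_open_slices a b : annulus Rid Rd a b ->
  exists del, del > 0 /\ forall t, Rabs (t - a) < del -> annulus Rid Rd t b /\ annulus Rid Rd b t.
Proof.
  unfold annulus; simpl; rewrite !Rmult_1_r; intros [A B].
  set (gap := Rmin (a * a + b * b - Rid * Rid) (Rd * Rd - (a * a + b * b))).
  assert (Hg : gap > 0) by (unfold gap; apply Rmin_pos; lra).
  destruct (cont_at_norm2 a b gap Hg) as [d [Hd Hc]]; exists d; split; auto.
  intros t Ht; specialize (Hc t b Ht ltac:(unfold Rminus; rewrite Rplus_opp_r, Rabs_R0; lra)).
  apply Rabs_def2 in Hc.
  pose proof (Rmin_l (a * a + b * b - Rid * Rid) (Rd * Rd - (a * a + b * b))).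
  pose proof (Rmin_r (a * a + b * b - Rid * Rid) (Rd * Rd - (a * a + b * b))).
  fold gap in H, H0; repeat split; lra.
Qed.

(** A subharmonic function has no interior maximum: in both coordinate
    directions the second derivative would be  <= 0, but the Laplacian is  4 ep > 0. *)
Lemma no_interior_max w ep Qx Qy : ep > 0 -> C2_harmonic (annulus Rid Rd) w ->
  annulus Rid Rd Qx Qy ->
  (forall x y, cl_annulus Rid Rd x y -> add_paraboloid w ep x y <= add_paraboloid w ep Qx Qy) ->
  False.
Proof.
  intros Hep [wx [wy [wxx [wxy [wyx [wyy [Hd _]]]]]]] AQ HQ.
  assert (an_cl : forall x y, annulus Rid Rd x y -> cl_annulus Rid Rd x y)
    by (unfold annulus, cl_annulus; intros; lra).
  destruct (annulus_open_slices Qx Qy AQ) as [d1 [Hd1 L1]].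
  destruct (annulus_open_slices Qy Qx ltac:(unfold annulus in *; lra)) as [d2 [Hd2 L2]].
  assert (D2 : forall t, derivable_pt_lim (fun s => 2 * s) t 2).
  { intro t; eapply dpl_eq. 3: apply (derivable_pt_lim_scal _ 2 _ _ (derivable_pt_lim_id t)).
    - reflexivity.
    - ring. }
  assert (G1 : wxx Qx Qy + ep * 2 <= 0).
  { apply (second_derivative_at_max (fun t => add_paraboloid w ep t Qy)
             (fun t => wx t Qy + ep * (2 * t)) _ Qx d1 Hd1).
    - intros t Ht; destruct (L1 t Ht) as [A _]; unfold add_paraboloid.
      apply dpl_add_scal; [apply Hd; auto|].
      eapply dpl_eq. 3: apply (derivable_pt_lim_plus _ _ _ _ _ (dpl_sq t) (derivable_pt_lim_const (Qy * Qy) t)).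
      + reflexivity.
      + ring.
    - apply dpl_add_scal; [apply Hd; auto | apply D2].
    - intros t Ht; apply HQ, an_cl, L1; auto. }
  assert (G2 : wyy Qx Qy + ep * 2 <= 0).
  { apply (second_derivative_at_max (fun t => add_paraboloid w ep Qx t)
             (fun t => wy Qx t + ep * (2 * t)) _ Qy d2 Hd2).
    - intros t Ht; destruct (L2 t Ht) as [_ A]; unfold add_paraboloid.
      apply dpl_add_scal; [apply Hd; auto|].
      eapply dpl_eq. 3: apply (derivable_pt_lim_plus _ _ _ _ _ (derivable_pt_lim_const (Qx * Qx) t) (dpl_sq t)).
      + reflexivity.
      + ring.
    - apply dpl_add_scal; [apply Hd; auto | apply D2].
    - intros t Ht; apply HQ, an_cl, L2; auto. }
  assert (Lw : - (wxx Qx Qy + wyy Qx Qy) = 0) by (apply Hd; auto).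
  lra.
Qed.

(** No maximum on the outer boundary either when the outward normal
    derivative there is negative: difference quotients towards the maximum
    point are  >= 0. *)
Lemma no_outer_max w ep t0 l :
  dn_outer_R Rid Rd w t0 l -> l + ep * (2 * Rd) < 0 ->
  (forall x y, cl_annulus Rid Rd x y ->
     add_paraboloid w ep x y <= add_paraboloid w ep (Rd * cos t0) (Rd * sin t0)) ->
  False.
Proof.
  intros Hw Hneg HQ.
  assert (Hq : dn_outer_R Rid Rd (fun x y => x * x + y * y) t0 (2 * Rd))
    by (apply (dn_outer_R_radial _ _ _ _ (fun r => r * r)); [lra | intros; apply polar_norm2 | apply dpl_sq]).
  pose proof (dn_outer_R_lin _ _ _ _ ep _ _ _ Hw Hq) as Hv.
  assert (0 <= l + ep * (2 * Rd)); [|lra].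
  apply (left_limit_nonneg _ Rid Rd _ Rid_lt_Rd Hv); intros r Hr.
  assert (add_paraboloid w ep (r * cos t0) (r * sin t0)
          <= add_paraboloid w ep (Rd * cos t0) (Rd * sin t0))
    by (apply HQ, cl_annulus_polar; auto; lra).
  unfold add_paraboloid in H.
  replace (_ / _) with ((- (w (r * cos t0) (r * sin t0) + ep * (r * cos t0 * (r * cos t0) + r * sin t0 * (r * sin t0))
            - (w (Rd * cos t0) (Rd * sin t0) + ep * (Rd * cos t0 * (Rd * cos t0) + Rd * sin t0 * (Rd * sin t0))))) / (Rd - r))
    by (field; lra).
  unfold Rdiv; apply Rmult_le_pos; [lra | left; apply Rinv_0_lt_compat; lra].
Qed.

Lemma max_on_inner_boundary w ep : ep > 0 ->
  C2_harmonic (annulus Rid Rd) w -> cont_on (cl_annulus Rid Rd) w ->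
  (forall th, exists l, dn_outer_R Rid Rd w th l /\ l + ep * (2 * Rd) < 0) ->
  forall x y, cl_annulus Rid Rd x y ->
    exists th, add_paraboloid w ep x y <= add_paraboloid w ep (Rid * cos th) (Rid * sin th).
Proof.
  intros Hep Hw Cw Hout x y Hxy.
  assert (Cv : cont_on (cl_annulus Rid Rd) (add_paraboloid w ep))
    by (apply cont_on_lin; auto; apply cont_on_of_cont_at; intros; apply cont_at_norm2).
  destruct (max_on_cl_annulus Rid Rd _ Rid_pos (Rlt_le _ _ Rid_lt_Rd) Cv) as [r0 [t0 [Hr0 Hmax]]].
  destruct (Rle_lt_or_eq_dec Rid r0 (proj1 Hr0)) as [Hlo | <-].
  - destruct (Rle_lt_or_eq_dec r0 Rd (proj2 Hr0)) as [Hhi | ->].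
    + exfalso; apply (no_interior_max w ep (r0 * cos t0) (r0 * sin t0)); auto.
      apply annulus_polar; auto.
    + exfalso; destruct (Hout t0) as [l [Hl Hneg]]; exact (no_outer_max w ep t0 l Hl Hneg Hmax).
  - exists t0; apply Hmax; auto.
Qed.

(** The barrier  h = ln |x|^2 - ln Rid^2: harmonic, zero on Gamma_id, with
    normal derivative  2 / Rd  on Gamma_d. *)
Definition log_barrier : hfun := HFun (Mono (- ln (Rid * Rid), 0) false false 0 :: nil) Cone.

Lemma log_barrier_val x y : reF (hf_val log_barrier) x y = ln_norm2 x y - ln (Rid * Rid).
Proof. unfold reF, hf_val, log_barrier, msum, mono_val, mono_var; simpl; ring. Qed.

Lemma log_barrier_polar r th : reF (hf_val log_barrier) (r * cos th) (r * sin th) = ln (r * r) - ln (Rid * Rid).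
Proof. rewrite log_barrier_val; unfold ln_norm2; rewrite polar_norm2; reflexivity. Qed.

Lemma log_barrier_dn_outer th : dn_outer_R Rid Rd (reF (hf_val log_barrier)) th (2 / Rd).
Proof.
  apply (dn_outer_R_radial _ _ _ _ (fun r => ln (r * r) - ln (Rid * Rid))); [lra | intros; apply log_barrier_polar|].
  eapply dpl_eq. 3: apply (derivable_pt_lim_minus _ _ _ _ _ (dpl_ln_sq Rd ltac:(lra))
                            (derivable_pt_lim_const (ln (Rid * Rid)) Rd)).
  - reflexivity.
  - ring.
Qed.

(** For every  del > 0,  z <= del h  by the
    maximum principle applied to  w = z - del h  with  ep = del / (2 Rd^2). *)
Lemma homogeneous_below_barrier z del : del > 0 ->
  C2_harmonic (annulus Rid Rd) z -> cont_on (cl_annulus Rid Rd) z ->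
  (forall th, z (Rid * cos th) (Rid * sin th) = 0) -> (forall th, dn_outer_R Rid Rd z th 0) ->
  forall x y, cl_annulus Rid Rd x y -> z x y <= del * reF (hf_val log_barrier) x y.
Proof.
  intros Hdel Hz Cz Hin Hout x y Hxy.
  set (h := reF (hf_val log_barrier)); set (ep := del / (2 * (Rd * Rd))).
  assert (Hep : ep > 0) by (unfold ep; apply Rdiv_lt_0_compat; nra).
  destruct (hf_harmonic Rid Rd log_barrier Rid_pos) as [Hh [_ [Ch _]]].
  destruct (max_on_inner_boundary (fun x y => z x y + - del * h x y) ep Hep) with (x := x) (y := y)
    as [th Hth]; auto.
  - apply C2_harmonic_lin; auto.
  - apply cont_on_lin; auto.
  - intro th; exists (0 + - del * (2 / Rd)); split.
    + apply dn_outer_R_lin; auto; apply log_barrier_dn_outer.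
    + unfold ep; replace (del / (2 * (Rd * Rd)) * (2 * Rd)) with (del / Rd) by (field; lra).
      replace (- del * (2 / Rd)) with (- 2 * (del / Rd)) by (field; lra).
      assert (0 < del / Rd) by (apply Rdiv_lt_0_compat; lra); lra.
  - unfold add_paraboloid in Hth; unfold h in Hth; rewrite Hin, log_barrier_polar, polar_norm2 in Hth.
    unfold cl_annulus in Hxy; simpl in Hxy; rewrite !Rmult_1_r in Hxy.
    assert (ep * (Rid * Rid) <= ep * (x * x + y * y)) by (apply Rmult_le_compat_l; lra).
    unfold h; rewrite Rminus_diag in Hth; lra.
Qed.

Lemma homogeneous_nonpos z :
  C2_harmonic (annulus Rid Rd) z -> cont_on (cl_annulus Rid Rd) z ->
  (forall th, z (Rid * cos th) (Rid * sin th) = 0) -> (forall th, dn_outer_R Rid Rd z th 0) ->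
  forall x y, cl_annulus Rid Rd x y -> z x y <= 0.
Proof.
  intros Hz Cz Hin Hout x y Hxy; apply Rnot_lt_le; intro Hm.
  set (H := Rabs (reF (hf_val log_barrier) x y)).
  set (del := z x y / (2 * (H + 1))).
  assert (HH : 0 <= H) by apply Rabs_pos.
  assert (Hdel : del > 0) by (unfold del; apply Rdiv_lt_0_compat; lra).
  pose proof (homogeneous_below_barrier z del Hdel Hz Cz Hin Hout x y Hxy) as Hb.
  assert (del * reF (hf_val log_barrier) x y <= del * H)
    by (apply Rmult_le_compat_l; [lra | apply Rle_abs]).
  assert (del * H < z x y).
  { unfold del; apply (Rmult_lt_reg_r (2 * (H + 1))); [lra|].
    replace (z x y / (2 * (H + 1)) * H * (2 * (H + 1))) with (z x y * H) by (field; lra); nra. }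
  lra.
Qed.

End MaxPrinciple.

Definition Clin (w1 w2 : R -> R -> Cx) (k : R) : R -> R -> Cx :=
  fun x y => Cadd (w1 x y) (Cscale k (w2 x y)).

Lemma mixed_sol_lin Rid Rd g1 h1 w1 g2 h2 w2 k :
  mixed_sol Rid Rd g1 h1 w1 -> mixed_sol Rid Rd g2 h2 w2 ->
  mixed_sol Rid Rd (fun th => Cadd (g1 th) (Cscale k (g2 th)))
    (fun th => Cadd (h1 th) (Cscale k (h2 th))) (Clin w1 w2 k).
Proof.
  intros [A1 [A2 [A3 [A4 [A5 A6]]]]] [B1 [B2 [B3 [B4 [B5 B6]]]]].
  unfold mixed_sol, Clin, reF, imF; simpl; repeat split.
  - apply (C2_harmonic_lin _ (reF w1) (reF w2)); auto.
  - apply (C2_harmonic_lin _ (imF w1) (imF w2)); auto.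
  - apply (cont_on_lin _ (reF w1) (reF w2)); auto.
  - apply (cont_on_lin _ (imF w1) (imF w2)); auto.
  - apply (dn_outer_R_lin _ _ (reF w1) (reF w2)); [apply A5 | apply B5].
  - apply (dn_outer_R_lin _ _ (imF w1) (imF w2)); [apply A5 | apply B5].
  - intro th; rewrite A6, B6; reflexivity.
Qed.

Lemma mixed_sol_ext Rid Rd g g' h h' w : (forall th, g th = g' th) -> (forall th, h th = h' th) ->
  mixed_sol Rid Rd g h w -> mixed_sol Rid Rd g' h' w.
Proof.
  intros Eg Eh [A1 [A2 [A3 [A4 [A5 A6]]]]]; repeat split; auto.
  - intros; rewrite <- Eg; apply A5.
  - intros; rewrite <- Eg; apply A5.
  - intros; rewrite <- Eh; apply A6.
Qed.

(** Comparison: the difference of two solutions with the same data solves the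
    homogeneous problem, so each of its components is  <= 0. *)
Lemma mixed_sol_le Rid Rd g h w1 w2 : 0 < Rid -> Rid < Rd ->
  mixed_sol Rid Rd g h w1 -> mixed_sol Rid Rd g h w2 ->
  forall x y, cl_annulus Rid Rd x y -> fst (w1 x y) <= fst (w2 x y) /\ snd (w1 x y) <= snd (w2 x y).
Proof.
  intros P0 P1 S1 S2 x y Hxy.
  destruct (mixed_sol_lin _ _ _ _ _ _ _ _ (-1) S1 S2) as [A1 [A2 [A3 [A4 [A5 A6]]]]].
  assert (Hr : reF (Clin w1 w2 (-1)) x y <= 0).
  { apply (homogeneous_nonpos Rid Rd); auto.
    - intro th; unfold reF; rewrite A6; simpl; ring.
    - intro th; destruct (A5 th) as [B _]; simpl in B.
      replace 0 with (fst (g th) + -1 * fst (g th)) by ring; exact B. }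
  assert (Hi : imF (Clin w1 w2 (-1)) x y <= 0).
  { apply (homogeneous_nonpos Rid Rd); auto.
    - intro th; unfold imF; rewrite A6; simpl; ring.
    - intro th; destruct (A5 th) as [_ B]; simpl in B.
      replace 0 with (snd (g th) + -1 * snd (g th)) by ring; exact B. }
  unfold reF, imF, Clin in *; simpl in *; lra.
Qed.

Lemma mixed_sol_unique Rid Rd g h w1 w2 : 0 < Rid -> Rid < Rd ->
  mixed_sol Rid Rd g h w1 -> mixed_sol Rid Rd g h w2 ->
  forall x y, cl_annulus Rid Rd x y -> w1 x y = w2 x y.
Proof.
  intros P0 P1 S1 S2 x y Hxy.
  destruct (mixed_sol_le _ _ _ _ _ _ P0 P1 S1 S2 x y Hxy), (mixed_sol_le _ _ _ _ _ _ P0 P1 S2 S1 x y Hxy).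
  destruct (w1 x y), (w2 x y); simpl in *; apply Cpair_eq; lra.
Qed.

Lemma dn_inner_transfer Rid Rd w1 w2 th l : 0 < Rid -> Rid < Rd ->
  (forall x y, cl_annulus Rid Rd x y -> w1 x y = w2 x y) ->
  dn_inner Rid Rd w1 th l -> dn_inner Rid Rd w2 th l.
Proof.
  intros P0 P1 E [A B]; split; unfold dn_inner_R, reF, imF in *;
    (eapply limit1_ext; [|eassumption]); intros r Hr; cbv beta;
    rewrite !E; auto; apply cl_annulus_polar; lra.
Qed.

Lemma dn_inner_unique Rid Rd w th l1 l2 : Rid < Rd ->
  dn_inner Rid Rd w th l1 -> dn_inner Rid Rd w th l2 -> l1 = l2.
Proof.
  intros H [A1 B1] [A2 B2].
  assert (Adh : adhDa (fun r => Rid < r <= Rd) Rid).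
  { intros alp Ha; exists (Rmin Rd (Rid + alp / 2)); split.
    - unfold Rmin; destruct Rle_dec; lra.
    - simpl; unfold R_dist, Rmin; destruct Rle_dec; rewrite Rabs_right; lra. }
  destruct l1, l2; simpl in *; f_equal; eapply single_limit; eauto.
Qed.

Definition Cpol (r p : R) : Cx := (r * cos p, r * sin p).

Lemma Cmul_pol a p b q : Cmul (Cpol a p) (Cpol b q) = Cpol (a * b) (p + q).
Proof. unfold Cpol, Cmul; simpl; rewrite cos_plus, sin_plus; apply Cpair_eq; ring. Qed.

Lemma Cpow_pol r p n : Cpow (Cpol r p) n = Cpol (r ^ n) (INR n * p).
Proof.
  induction n as [|n IH]; simpl Cpow.
  - unfold Cpol, Cone; simpl; rewrite Rmult_0_l, cos_0, sin_0; apply Cpair_eq; ring.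
  - rewrite IH, Cmul_pol, S_INR; f_equal; ring.
Qed.

Lemma Cinv_pol r p : r <> 0 -> Cinv (Cpol r p) = Cpol (/ r) (- p).
Proof.
  intro H; unfold Cinv, Cnorm2, Cpol; simpl; rewrite cos_neg, sin_neg.
  replace (r * cos p * (r * cos p) + r * sin p * (r * sin p)) with (r * r)
    by (pose proof (cos_sin_sq p); nra).
  apply Cpair_eq; field; auto.
Qed.

Lemma mono_base_pol cj r th : mono_base cj (r * cos th) (r * sin th) = Cpol r (if cj then - th else th).
Proof. destruct cj; unfold mono_base, Cpol; auto; rewrite cos_neg, sin_neg; apply Cpair_eq; ring. Qed.

Lemma IZR_abs j : IZR j = if Z.leb 0 j then INR (Z.abs_nat j) else - INR (Z.abs_nat j).
Proof.
  rewrite INR_IZR_INZ, Nat2Z.inj_abs_nat; destruct (Z.leb 0 j) eqn:E.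
  - apply Z.leb_le in E; rewrite Z.abs_eq; auto.
  - apply Z.leb_gt in E; rewrite Z.abs_neq by lia; rewrite opp_IZR; ring.
Qed.

(** The harmonic monomials  c r^|j| e^{i j th}  and  c r^-|j| e^{i j th}:
    z^j, zbar^|j|, z^-j, zbar^-|j|  according to the sign of  j. *)
Definition pos_mono (j : Z) (c : Cx) : mono := Mono c (negb (Z.leb 0 j)) false (Z.abs_nat j).
Definition neg_mono (j : Z) (c : Cx) : mono := Mono c (Z.leb 0 j) true (Z.abs_nat j).

Lemma pos_mono_polar j c r th : mono_val (pos_mono j c) (r * cos th) (r * sin th) =
  Cscale (r ^ Z.abs_nat j) (Cmul c (Cexpi j th)).
Proof.
  unfold pos_mono, mono_val, mono_var, Cexpi; rewrite (IZR_abs j).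
  destruct (Z.leb 0 j); cbn [m_coef m_conj m_inv m_deg negb]; rewrite mono_base_pol, Cpow_pol;
    unfold Cpol; cx_unfold;
    [|replace (- INR (Z.abs_nat j) * th) with (INR (Z.abs_nat j) * - th) by ring];
    apply Cpair_eq; ring.
Qed.

Lemma neg_mono_polar j c r th : r <> 0 -> mono_val (neg_mono j c) (r * cos th) (r * sin th) =
  Cscale ((/ r) ^ Z.abs_nat j) (Cmul c (Cexpi j th)).
Proof.
  intro H; unfold neg_mono, mono_val, mono_var, Cexpi; rewrite (IZR_abs j).
  destruct (Z.leb 0 j); cbn [m_coef m_conj m_inv m_deg];
    rewrite mono_base_pol, Cinv_pol, Cpow_pol by auto; unfold Cpol;
    cx_unfold; try rewrite Ropp_involutive;
    try (replace (- INR (Z.abs_nat j) * th) with (INR (Z.abs_nat j) * - th) by ring);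
    apply Cpair_eq; ring.
Qed.

Definition hf_add (f1 f2 : hfun) : hfun := HFun (hf_monos f1 ++ hf_monos f2) (Cadd (hf_log f1) (hf_log f2)).
Definition hf_zero : hfun := HFun nil C0.

Lemma hf_val_add f1 f2 x y : hf_val (hf_add f1 f2) x y = Cadd (hf_val f1 x y) (hf_val f2 x y).
Proof.
  unfold hf_val, hf_add; simpl; rewrite msum_app.
  generalize (msum (hf_monos f1) x y) (msum (hf_monos f2) x y) (hf_log f1) (hf_log f2); intros; cx_ring.
Qed.

Definition mode_sum (prof : Z -> R -> R) (a : Z -> Cx) (L : list Z) (r th : R) : Cx :=
  fold_right (fun j acc => Cadd (Cscale (prof j r) (Cmul (a j) (Cexpi j th))) acc) C0 L.

Lemma hf_val_sum (mode : Z -> hfun) prof a L r th :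
  (forall j, In j L -> hf_val (mode j) (r * cos th) (r * sin th) = Cscale (prof j r) (Cmul (a j) (Cexpi j th))) ->
  hf_val (fold_right hf_add hf_zero (map mode L)) (r * cos th) (r * sin th) = mode_sum prof a L r th.
Proof.
  induction L as [|j L IH]; intro H; simpl.
  - unfold hf_val, hf_zero, msum; simpl; cx_ring.
  - rewrite hf_val_add, H by (simpl; auto).
    rewrite IH by (intros; apply H; simpl; auto); reflexivity.
Qed.

Lemma mode_sum_ext p q a L r r' th : (forall j, p j r = q j r') -> mode_sum p a L r th = mode_sum q a L r' th.
Proof. intro H; induction L as [|j L IH]; simpl; auto; rewrite IH, H; auto. Qed.

Lemma mode_sum_zero a L r th : mode_sum (fun _ _ => 0) a L r th = C0.
Proof.
  induction L as [|j L IH]; simpl; auto; rewrite IH.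
  generalize (Cmul (a j) (Cexpi j th)); intros; cx_ring.
Qed.

Lemma mode_sum_scal k p a L r th : Cscale k (mode_sum p a L r th) = mode_sum (fun j r => k * p j r) a L r th.
Proof.
  induction L as [|j L IH]; simpl; [cx_ring|]; rewrite <- IH.
  generalize (mode_sum p a L r th) (Cmul (a j) (Cexpi j th)); intros; cx_ring.
Qed.

Lemma mode_sum_coef p a L r th r' :
  mode_sum p a L r th = mode_sum (fun _ _ => 1) (fun j => Cscale (p j r) (a j)) L r' th.
Proof.
  induction L as [|j L IH]; simpl; auto; rewrite IH; f_equal.
  generalize (a j) (Cexpi j th); intros; cx_ring.
Qed.

Lemma Cderiv_mode_sum prof d a L th r0 : (forall j, derivable_pt_lim (prof j) r0 (d j)) ->
  Cderiv (fun r => mode_sum prof a L r th) r0 (mode_sum (fun j _ => d j) a L r0 th).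
Proof.
  intro H; induction L as [|j L IH]; simpl; [apply Cderiv_const|].
  apply (Cderiv_add (fun r => Cscale (prof j r) (Cmul (a j) (Cexpi j th)))); auto.
  destruct (Cmul (a j) (Cexpi j th)) as [k1 k2]; split; simpl.
  - eapply dpl_eq. 3: apply (derivable_pt_lim_scal _ k1 _ _ (H j)).
    + intro; unfold mult_real_fct; ring.
    + ring.
  - eapply dpl_eq. 3: apply (derivable_pt_lim_scal _ k2 _ _ (H j)).
    + intro; unfold mult_real_fct; ring.
    + ring.
Qed.

Lemma dn_outer_mode_sum Rid Rd (w : R -> R -> Cx) prof d a L th : Rid < Rd ->
  (forall r, Rid <= r <= Rd -> w (r * cos th) (r * sin th) = mode_sum prof a L r th) ->
  (forall j, derivable_pt_lim (prof j) Rd (d j)) ->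
  dn_outer Rid Rd w th (mode_sum (fun j _ => d j) a L Rd th).
Proof.
  intros HR E D; destruct (Cderiv_mode_sum prof d a L th Rd D) as [D1 D2]; split.
  - apply (dn_outer_R_radial _ _ _ _ (fun s => fst (mode_sum prof a L s th))); auto.
    intros; unfold reF; rewrite E; auto.
  - apply (dn_outer_R_radial _ _ _ _ (fun s => snd (mode_sum prof a L s th))); auto.
    intros; unfold imF; rewrite E; auto.
Qed.

Lemma dn_inner_mode_sum Rid Rd (w : R -> R -> Cx) prof d a L th : Rid < Rd ->
  (forall r, Rid <= r <= Rd -> w (r * cos th) (r * sin th) = mode_sum prof a L r th) ->
  (forall j, derivable_pt_lim (prof j) Rid (d j)) ->
  dn_inner Rid Rd w th (Copp (mode_sum (fun j _ => d j) a L Rid th)).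
Proof.
  intros HR E D; destruct (Cderiv_mode_sum prof d a L th Rid D) as [D1 D2]; split.
  - apply (dn_inner_R_radial _ _ _ _ (fun s => fst (mode_sum prof a L s th))); auto.
    intros; unfold reF; rewrite E; auto.
  - apply (dn_inner_R_radial _ _ _ _ (fun s => snd (mode_sum prof a L s th))); auto.
    intros; unfold imF; rewrite E; auto.
Qed.

Definition modes (M N : nat) : list Z := filter (fun j => Z.leb (Z.of_nat M) (Z.abs j)) (Zrange N).

Lemma fsum_mode_sum M N b th r : fsum M N b th = mode_sum (fun _ _ => 1) b (modes M N) r th.
Proof.
  unfold fsum, modes; induction (filter _ (Zrange N)) as [|j l IH]; simpl; auto.
  rewrite IH; f_equal; cx_ring.
Qed.

Lemma fsum_ext M N b c th : (forall j, b j = c j) -> fsum M N b th = fsum M N c th.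
Proof. intro E; unfold fsum; induction (filter _ (Zrange N)) as [|j l IH]; simpl; [|rewrite E, IH]; auto. Qed.

Lemma fsum_lin M N b c k th : Cadd (fsum M N b th) (Cscale k (fsum M N c th)) =
  fsum M N (fun j => Cadd (b j) (Cscale k (c j))) th.
Proof.
  unfold fsum; induction (filter _ (Zrange N)) as [|j l IH]; simpl; [cx_ring|]; rewrite <- IH.
  generalize (fold_right (fun j acc => Cadd (Cmul (b j) (Cexpi j th)) acc) C0 l)
    (fold_right (fun j acc => Cadd (Cmul (c j) (Cexpi j th)) acc) C0 l) (b j) (c j) (Cexpi j th).
  intros; cx_ring.
Qed.

Lemma dpl_profile al be n r : r <> 0 ->
  derivable_pt_lim (fun s => al * s ^ n + be * (/ s) ^ n) r (INR n * (al * r ^ n - be * (/ r) ^ n) / r).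
Proof.
  intro H.
  assert (D1 : derivable_pt_lim (fun s => s ^ n) r (INR n * r ^ n / r)).
  { eapply dpl_eq. 3: apply derivable_pt_lim_pow.
    - reflexivity.
    - destruct n; [simpl; field; auto|]; simpl pred; rewrite <- tech_pow_Rmult; field; auto. }
  assert (D2 : derivable_pt_lim (fun s => (/ s) ^ n) r (- INR n * (/ r) ^ n / r)).
  { assert (Di : derivable_pt_lim Rinv r (- / (r * r))).
    { eapply dpl_eq.
      3: apply (derivable_pt_lim_div (fct_cte 1) id r 0 1 (derivable_pt_lim_const 1 r) (derivable_pt_lim_id r)).
      - intro; unfold div_fct, fct_cte, id, Rdiv; ring.
      - unfold fct_cte, id, Rsqr; field; auto.
      - unfold id; auto. }
    eapply dpl_eq. 3: apply (derivable_pt_lim_comp Rinv (fun s => s ^ n) r _ _ Di (derivable_pt_lim_pow (/ r) n)).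
    - reflexivity.
    - destruct n; [simpl; field; auto|]; simpl pred; rewrite <- tech_pow_Rmult; field; auto. }
  eapply dpl_eq. 3: apply (dpl_add_scal _ _ _ _ _ be (derivable_pt_lim_scal _ al _ _ D1) D2).
  - reflexivity.
  - field; auto.
Qed.

(** ** The explicit solutions, mode by mode *)

Section Modes.
Variables Rid Rd : R.
Variable a : Z -> Cx.

Definition deg (j : Z) : nat := Z.abs_nat j.
Definition rin (j : Z) : R := Rid ^ deg j.
Definition rout (j : Z) : R := Rd ^ deg j.

(** Profile of  W:  W_j(r) = A r^n + B r^-n  with  W_j(Rid) = 1  and  W_j'(Rd) = 0. *)
Definition W_pos (j : Z) : R := rin j / (rin j * rin j + rout j * rout j).
Definition W_neg (j : Z) : R := W_pos j * (rout j * rout j).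
Definition profW (j : Z) (r : R) : R := W_pos j * r ^ deg j + W_neg j * (/ r) ^ deg j.
Definition modeW (j : Z) : hfun :=
  HFun (pos_mono j (Cscale (W_pos j) (a j)) :: neg_mono j (Cscale (W_neg j) (a j)) :: nil) C0.

(** Profile of  V:  V_j(Rid) = 0  and  V_j'(Rd) = -2 W_j(Rd) = slopeV j;
    for  j = 0  the profile is  gamma ln(r^2 / Rid^2). *)
Definition slopeV (j : Z) : R := - (4 * W_pos j * rout j).
Definition V_pos (j : Z) : R := slopeV j * Rd / (INR (deg j) * (rout j + rin j * rin j / rout j)).
Definition V_neg (j : Z) : R := - (V_pos j * (rin j * rin j)).
Definition V_log : R := slopeV 0 * Rd / 2.
Definition profV (j : Z) (r : R) : R :=
  if Z.eqb j 0 then V_log * (ln (r * r) - ln (Rid * Rid))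
  else V_pos j * r ^ deg j + V_neg j * (/ r) ^ deg j.
Definition modeV (j : Z) : hfun :=
  if Z.eqb j 0
  then HFun (Mono (Cscale (- (V_log * ln (Rid * Rid))) (a j)) false false 0 :: nil) (Cscale V_log (a j))
  else HFun (pos_mono j (Cscale (V_pos j) (a j)) :: neg_mono j (Cscale (V_neg j) (a j)) :: nil) C0.
Definition dprofV (j : Z) (r : R) : R :=
  if Z.eqb j 0 then V_log * (2 / r)
  else INR (deg j) * (V_pos j * r ^ deg j - V_neg j * (/ r) ^ deg j) / r.

Lemma modeW_polar j r th : r <> 0 ->
  hf_val (modeW j) (r * cos th) (r * sin th) = Cscale (profW j r) (Cmul (a j) (Cexpi j th)).
Proof.
  intro H; unfold hf_val, modeW, msum; simpl hf_monos; simpl hf_log; cbn [fold_right].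
  rewrite pos_mono_polar, neg_mono_polar by auto; unfold profW, deg.
  generalize (Cexpi j th) (a j) (r ^ Z.abs_nat j) ((/ r) ^ Z.abs_nat j); intros; cx_ring.
Qed.

Lemma modeV_polar j r th : r <> 0 ->
  hf_val (modeV j) (r * cos th) (r * sin th) = Cscale (profV j r) (Cmul (a j) (Cexpi j th)).
Proof.
  intro H; unfold hf_val, modeV, profV, msum; destruct (Z.eqb j 0) eqn:E;
    simpl hf_monos; simpl hf_log; cbn [fold_right].
  - apply Z.eqb_eq in E; subst j; unfold Cexpi, ln_norm2, mono_val, mono_var; simpl.
    rewrite polar_norm2, Rmult_0_l, cos_0, sin_0; generalize (a 0%Z); intros; cx_ring.
  - rewrite pos_mono_polar, neg_mono_polar by auto; unfold deg.
    generalize (Cexpi j th) (a j) (r ^ Z.abs_nat j) ((/ r) ^ Z.abs_nat j); intros; cx_ring.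
Qed.

Hypothesis Rid_pos : 0 < Rid.
Hypothesis Rid_lt_Rd : Rid < Rd.

Lemma rin_pos j : 0 < rin j. Proof. unfold rin; apply pow_lt; auto. Qed.
Lemma rout_pos j : 0 < rout j. Proof. unfold rout; apply pow_lt; lra. Qed.
Lemma deg_pos j : Z.eqb j 0 = false -> 0 < INR (deg j).
Proof. intro E; apply lt_0_INR; unfold deg; apply Z.eqb_neq in E; lia. Qed.

Lemma profW_Rid j : profW j Rid = 1.
Proof.
  unfold profW, W_neg, W_pos; rewrite pow_inv; fold (rin j) (rout j).
  pose proof (rin_pos j); pose proof (rout_pos j); field; split; nra.
Qed.

Lemma profW_Rd j : profW j Rd = 2 * W_pos j * rout j.
Proof.
  unfold profW, W_neg, W_pos; rewrite pow_inv; fold (rin j) (rout j).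
  pose proof (rin_pos j); pose proof (rout_pos j); field; split; nra.
Qed.

Lemma dprofW j r : r <> 0 ->
  derivable_pt_lim (profW j) r (INR (deg j) * (W_pos j * r ^ deg j - W_neg j * (/ r) ^ deg j) / r).
Proof. intro; unfold profW; apply dpl_profile; auto. Qed.

Lemma dprofW_Rd j : INR (deg j) * (W_pos j * Rd ^ deg j - W_neg j * (/ Rd) ^ deg j) / Rd = 0.
Proof.
  unfold W_neg, W_pos; rewrite pow_inv; fold (rin j) (rout j).
  pose proof (rin_pos j); pose proof (rout_pos j); field; split; try nra; lra.
Qed.

Lemma profV_Rid j : profV j Rid = 0.
Proof.
  unfold profV; destruct (Z.eqb j 0); [ring|].
  unfold V_neg; rewrite pow_inv; fold (rin j); pose proof (rin_pos j); field; lra.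
Qed.

Lemma dprofV_spec j r : 0 < r -> derivable_pt_lim (profV j) r (dprofV j r).
Proof.
  intro H; unfold profV, dprofV; destruct (Z.eqb j 0); [|apply dpl_profile; lra].
  eapply dpl_eq. 3: apply (derivable_pt_lim_scal _ V_log _ _
       (derivable_pt_lim_minus _ _ _ _ _ (dpl_ln_sq r H) (derivable_pt_lim_const (ln (Rid * Rid)) r))).
  - reflexivity.
  - ring.
Qed.

Lemma dprofV_Rd j : dprofV j Rd = slopeV j.
Proof.
  unfold dprofV; destruct (Z.eqb j 0) eqn:E.
  - apply Z.eqb_eq in E; subst j; unfold V_log; field; lra.
  - unfold V_neg, V_pos; rewrite pow_inv; fold (rout j).
    pose proof (rin_pos j); pose proof (rout_pos j); pose proof (deg_pos j E).
    field; repeat split; try lra; nra.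
Qed.

Lemma Cj_eq j : Cj Rid Rd j =
  8 * (rout j * rout j * Rd) * (rin j * rin j / Rid) / ((rin j * rin j + rout j * rout j) ^ 2).
Proof.
  unfold Cj, rin, rout, deg; rewrite <- Nat2Z.inj_abs_nat; set (n := Z.abs_nat j).
  replace (2 * Z.of_nat n + 1)%Z with (Z.of_nat (n + n + 1)) by lia.
  replace (2 * Z.of_nat n)%Z with (Z.of_nat (n + n)) by lia.
  replace (Z.of_nat (n + n) - 1)%Z with (Z.of_nat (n + n) + (-1))%Z by lia.
  rewrite powerRZ_add by lra; rewrite <- !pow_powerRZ.
  replace (powerRZ Rid (-1)) with (/ Rid) by (simpl; field; lra).
  rewrite !pow_add, pow_1; unfold Rdiv; ring.
Qed.

Lemma dprofV_Rid j : - dprofV j Rid = Cj Rid Rd j.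
Proof.
  rewrite Cj_eq; unfold dprofV; destruct (Z.eqb j 0) eqn:E.
  - apply Z.eqb_eq in E; subst j; unfold V_log, slopeV, W_pos, rin, rout, deg; simpl; field; lra.
  - unfold V_neg, V_pos, slopeV, W_pos; rewrite pow_inv; fold (rin j).
    pose proof (rin_pos j); pose proof (rout_pos j); pose proof (deg_pos j E).
    field; repeat split; try lra; nra.
Qed.

Variables M N : nat.

Definition solW : hfun := fold_right hf_add hf_zero (map modeW (modes M N)).
Definition solV : hfun := fold_right hf_add hf_zero (map modeV (modes M N)).

Lemma solW_polar r th : 0 < r ->
  hf_val solW (r * cos th) (r * sin th) = mode_sum profW a (modes M N) r th.
Proof. intro; apply hf_val_sum; intros; apply modeW_polar; lra. Qed.

Lemma solV_polar r th : 0 < r ->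
  hf_val solV (r * cos th) (r * sin th) = mode_sum profV a (modes M N) r th.
Proof. intro; apply hf_val_sum; intros; apply modeV_polar; lra. Qed.

Lemma solW_mixed : mixed_sol Rid Rd (fun _ => C0) (fsum M N a) (hf_val solW).
Proof.
  destruct (hf_harmonic Rid Rd solW Rid_pos) as [H1 [H2 [H3 H4]]];
    do 4 (split; [assumption|]); split.
  - intro th; rewrite <- (mode_sum_zero a (modes M N) Rd th).
    rewrite (mode_sum_ext (fun _ _ => 0)
               (fun j _ => INR (deg j) * (W_pos j * Rd ^ deg j - W_neg j * (/ Rd) ^ deg j) / Rd) _ _ Rd Rd)
      by (intro j; rewrite dprofW_Rd; reflexivity).
    apply (dn_outer_mode_sum _ _ _ profW); auto.
    + intros; apply solW_polar; lra.
    + intro j; apply dprofW; lra.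
  - intro th; rewrite solW_polar, (fsum_mode_sum M N a th Rid) by lra.
    apply mode_sum_ext; intro j; apply profW_Rid.
Qed.

Lemma solV_mixed : mixed_sol Rid Rd
  (fun th => Cscale (-2) (hf_val solW (Rd * cos th) (Rd * sin th))) (fun _ => C0) (hf_val solV).
Proof.
  destruct (hf_harmonic Rid Rd solV Rid_pos) as [H1 [H2 [H3 H4]]];
    do 4 (split; [assumption|]); split.
  - intro th; rewrite solW_polar, mode_sum_scal by lra.
    rewrite (mode_sum_ext _ (fun j _ => dprofV j Rd) _ _ Rd Rd)
      by (intro j; rewrite dprofV_Rd, profW_Rd; unfold slopeV; ring).
    apply (dn_outer_mode_sum _ _ _ profV); auto.
    + intros; apply solV_polar; lra.
    + intro j; apply dprofV_spec; lra.
  - intro th; rewrite solV_polar by lra.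
    rewrite (mode_sum_ext _ (fun _ _ => 0) _ _ _ Rid) by (intro; apply profV_Rid).
    apply mode_sum_zero.
Qed.

Lemma solV_dn_inner th :
  dn_inner Rid Rd (hf_val solV) th (fsum M N (fun j => Cscale (Cj Rid Rd j) (a j)) th).
Proof.
  replace (fsum M N (fun j => Cscale (Cj Rid Rd j) (a j)) th)
    with (Copp (mode_sum (fun j _ => dprofV j Rid) a (modes M N) Rid th)).
  - apply (dn_inner_mode_sum _ _ _ profV); auto.
    + intros; apply solV_polar; lra.
    + intro j; apply dprofV_spec; lra.
  - replace (Copp (mode_sum (fun j _ => dprofV j Rid) a (modes M N) Rid th))
      with (Cscale (-1) (mode_sum (fun j _ => dprofV j Rid) a (modes M N) Rid th))
      by (generalize (mode_sum (fun j _ => dprofV j Rid) a (modes M N) Rid th); intros; cx_ring).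
    rewrite mode_sum_scal, (mode_sum_coef _ a _ Rid th Rid), <- fsum_mode_sum.
    apply fsum_ext; intro j; rewrite <- dprofV_Rid; f_equal; ring.
Qed.

End Modes.

Lemma gradient_step_coefficients Rid Rd M N a rho (os ok : Cx) th :
  Csub os ok = fsum M N a th ->
  Csub os (Csub ok (Cscale rho (Copp (fsum M N (fun j => Cscale (Cj Rid Rd j) (a j)) th))))
  = fsum M N (fun j => Cscale (1 - Cj Rid Rd j * rho) (a j)) th.
Proof.
  intro Hmu.
  rewrite (fsum_ext M N (fun j => Cscale (1 - Cj Rid Rd j * rho) (a j))
             (fun j => Cadd (a j) (Cscale (- rho) (Cscale (Cj Rid Rd j) (a j)))))
    by (intro j; destruct (a j); cx_ring).
  rewrite <- fsum_lin, <- Hmu.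
  generalize (fsum M N (fun j => Cscale (Cj Rid Rd j) (a j)) th); intros; cx_ring.
Qed.

Theorem mainTheorem4
  (Rid Rd : R) (HRid : 0 < Rid) (HRlt : Rid < Rd)
  (ubar qbar : R -> Cx)
  (omega_star : R -> Cx) (v_star : R -> R -> Cx)
  (Hvstar : primary_sol Rid Rd qbar omega_star v_star)
  (Hexact : forall th, v_star (Rd * cos th) (Rd * sin th) = ubar th)
  (omega_k : R -> Cx) (v_k vhat_k : R -> R -> Cx) (rho_k : R) (Hrho : 0 < rho_k)
  (Hvk : primary_sol Rid Rd qbar omega_k v_k)
  (Hvhatk : adjoint_sol Rid Rd ubar v_k vhat_k)
  (M N : nat) (HMN : (M <= N)%nat) (a : Z -> Cx)
  (Hmu : forall th, Csub (omega_star th) (omega_k th) = fsum M N a th) :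
  (forall th, dn_inner Rid Rd vhat_k th
                (fsum M N (fun j => Cscale (Cj Rid Rd j) (a j)) th))
  /\
  (forall Jk : R -> Cx,
     (forall th, dn_inner Rid Rd vhat_k th (Copp (Jk th))) ->
     forall th,
       Csub (omega_star th) (Csub (omega_k th) (Cscale rho_k (Jk th)))
       = fsum M N (fun j => Cscale (1 - Cj Rid Rd j * rho_k) (a j)) th).
Proof.
  set (W := hf_val (solW Rid Rd a M N)); set (V := hf_val (solV Rid Rd a M N)).
  (* v(omega_star) = v(omega_k) + W, since both solve the primary problem for omega_star. *)
  assert (Evs : forall x y, cl_annulus Rid Rd x y -> v_star x y = Clin v_k W 1 x y).
  { apply (mixed_sol_unique Rid Rd qbar omega_star); auto.
    eapply mixed_sol_ext;
      [| | exact (mixed_sol_lin _ _ _ _ _ _ _ _ 1 Hvk (solW_mixed Rid Rd a HRid HRlt M N))].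
    - intro th; cbv beta; destruct (qbar th); cx_ring.
    - intro th; cbv beta; rewrite <- Hmu; generalize (omega_k th) (omega_star th); intros; cx_ring. }
  (* Hence the adjoint data is  -2 W  on Gamma_d, and vhat(omega_k) = V. *)
  assert (Evh : forall x y, cl_annulus Rid Rd x y -> V x y = vhat_k x y).
  { apply (mixed_sol_unique Rid Rd
             (fun th => Cscale 2 (Csub (v_k (Rd * cos th) (Rd * sin th)) (ubar th))) (fun _ => C0)); auto.
    eapply mixed_sol_ext; [| | exact (solV_mixed Rid Rd a HRid HRlt M N)]; [|reflexivity].
    intro th; cbv beta; rewrite <- Hexact, Evs by (apply cl_annulus_polar; lra); unfold Clin, W.
    generalize (v_k (Rd * cos th) (Rd * sin th)); intros; cx_ring. }
  assert (DI : forall th, dn_inner Rid Rd vhat_k th (fsum M N (fun j => Cscale (Cj Rid Rd j) (a j)) th))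
    by (intro th; apply (dn_inner_transfer Rid Rd V); auto; apply solV_dn_inner; auto).
  split; [exact DI|].
  intros Jk HJ th.
  replace (Jk th) with (Copp (fsum M N (fun j => Cscale (Cj Rid Rd j) (a j)) th))
    by (rewrite <- (dn_inner_unique _ _ _ _ _ _ HRlt (HJ th) (DI th)); destruct (Jk th); cx_ring).
  apply gradient_step_coefficients, Hmu.
Qed.
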